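(* Let $\Lambda$ be a finite $k$-graph each of whose coordinate matrices $A_1,\dots,A_k$ is irreducible. Suppose there exist an $\mathbb{R}_+$-functor $y$ on $\Lambda$ and $\beta\in(0,\infty)$ such that for all $\lambda,\nu\in\Lambda$, $$y(\lambda)+\tfrac1\beta\ln\big(\rho(B(y,\beta))^{d(\lambda)}\big)=y(\nu)+\tfrac1\beta\ln\big(\rho(B(y,\beta))^{d(\nu)}\big)\ \Longrightarrow\ d(\lambda)=d(\nu).$$ Then $\Lambda$ is aperiodic.
   Context: A $k$-graph is a countable small category $\Lambda$ with a degree functor $d:\Lambda\to\mathbb{N}^k$ satisfying unique factorization: if $d(\lambda)=m+n$ there are unique $\eta,\nu$ with $\lambda=\eta\nu$, $d(\eta)=m$, $d(\nu)=n$. $\Lambda^n=d^{-1}(n)$, $\Lambda^0$ = vertices, $r,s$ range/source, $v\Lambda^nw$ paths of degree $n$ from $w$ to $v$; finite: each $\Lambda^n$ finite. Coordinate matrices: $A_i(v,w)=|v\Lambda^{e_i}w|$; a square nonnegative matrix is irreducible if for every pair of indices $(v,w)$ some power has positive $(v,w)$ entry. (Coordinatewise irreducibility implies $\Lambda$ is strongly connected, i.e. $v\Lambda w\neq\emptyset$ for all vertices.) An $\mathbb{R}_+$-functor is $y:\Lambda\to[0,\infty)$ with $y(v)=0$ on vertices and $y(\lambda\nu)=y(\lambda)+y(\nu)$ when $s(\lambda)=r(\nu)$. $B_i(y,\beta)_{v,w}=\sum_{\lambda\in v\Lambda^{e_i}w}e^{-\beta y(\lambda)}$; $\rho$ = spectral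 radius ($>0$); $\rho(B(y,\beta))^m=\prod_i\rho(B_i(y,\beta))^{m_i}$. $\Lambda^\infty$: degree-preserving functors from $\Omega_k$ (objects $\mathbb{N}^k$, morphisms $(m,n)$, $m\le n$, $d(m,n)=n-m$) into $\Lambda$; $Z(v)=\{x:x(0,0)=v\}$; $\sigma^j(x)(m,n)=x(m+j,n+j)$. $\mathrm{Per}(v)$ is the subgroup of $\mathbb{Z}^k$ generated by $\{m-n:\sigma^m(x)=\sigma^n(x)\ \forall x\in Z(v)\}$; for strongly connected finite $\Lambda$ it is independent of $v$, denoted $\mathrm{Per}\,\Lambda$; $\Lambda$ is aperiodic iff $\mathrm{Per}\,\Lambda=\{0\}$. *)

From Stdlib Require Import Reals List ZArith.
Open Scope R_scope.

Definition isNk (k : nat) (m : nat -> nat) : Prop := forall i, (k <= i)%nat -> m i = 0%nat.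
Definition leN (m n : nat -> nat) : Prop := forall i, (m i <= n i)%nat.
Definition addN (m n : nat -> nat) : nat -> nat := fun i => (m i + n i)%nat.
Definition zeroN : nat -> nat := fun _ => 0%nat.
Definition unitN (i : nat) : nat -> nat := fun j => if Nat.eqb j i then 1%nat else 0%nat.

Record kgraph_data := {
  Obj : Type;
  Mor : Type;
  obj_eq_dec : forall u v : Obj, {u = v} + {u <> v};
  rng : Mor -> Obj;
  src : Mor -> Obj;
  comp : Mor -> Mor -> Mor;          (* comp a b = a b, meaningful when src a = rng b *)
  idm : Obj -> Mor;
  deg : Mor -> nat -> nat;
  verts : list Obj;
  paths : (nat -> nat) -> list Mor
}.
Arguments rng {_}. Arguments src {_}. Arguments comp {_}. Arguments idm {_}.
Arguments deg {_}. Arguments verts {_}. Arguments paths {_}. Arguments obj_eq_dec {_}.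

Definition is_finite_kgraph (k : nat) (G : kgraph_data) : Prop :=
  (forall v : Obj G, rng (idm v) = v /\ src (idm v) = v) /\
  (forall a b : Mor G, src a = rng b -> rng (comp a b) = rng a /\ src (comp a b) = src b) /\
  (forall a b c : Mor G, src a = rng b -> src b = rng c ->
       comp (comp a b) c = comp a (comp b c)) /\
  (forall a : Mor G, comp (idm (rng a)) a = a /\ comp a (idm (src a)) = a) /\
  (exists f : Mor G -> nat, forall a b, f a = f b -> a = b) /\
  (forall a : Mor G, isNk k (deg a)) /\
  (forall v : Obj G, forall i, deg (idm v) i = 0%nat) /\
  (forall a b : Mor G, src a = rng b -> forall i, deg (comp a b) i = (deg a i + deg b i)%nat) /\
  (forall (lam : Mor G) (m n : nat -> nat), isNk k m -> isNk k n ->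
     (forall i, deg lam i = (m i + n i)%nat) ->
     exists eta nu : Mor G,
       src eta = rng nu /\ lam = comp eta nu /\
       (forall i, deg eta i = m i) /\ (forall i, deg nu i = n i) /\
       (forall eta' nu' : Mor G, src eta' = rng nu' -> lam = comp eta' nu' ->
          (forall i, deg eta' i = m i) -> (forall i, deg nu' i = n i) ->
          eta' = eta /\ nu' = nu)) /\
  NoDup (@verts G) /\ (forall v : Obj G, In v verts) /\
  (forall n, isNk k n -> NoDup (@paths G n) /\
     forall lam : Mor G, In lam (paths n) <-> (forall i, deg lam i = n i)).

Definition mat (G : kgraph_data) := Obj G -> Obj G -> R.

Definition sumV (G : kgraph_data) (f : Obj G -> R) : R :=
  fold_right Rplus 0 (map f (@verts G)).

Definition mmul {G : kgraph_data} (A B : mat G) : mat G :=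
  fun v w => sumV G (fun u => A v u * B u w).

Definition mid (G : kgraph_data) : mat G :=
  fun v w => if obj_eq_dec v w then 1 else 0.

Fixpoint mpow {G : kgraph_data} (A : mat G) (n : nat) : mat G :=
  match n with O => mid G | S n' => mmul A (mpow A n') end.

Definition irreducible {G : kgraph_data} (A : mat G) : Prop :=
  forall v w : Obj G, exists n : nat, (1 <= n)%nat /\ 0 < mpow A n v w.

Definition inVW {G : kgraph_data} (v w : Obj G) (lam : Mor G) : bool :=
  if obj_eq_dec (rng lam) v then (if obj_eq_dec (src lam) w then true else false) else false.

Definition coord_mat (G : kgraph_data) (i : nat) : mat G :=
  fun v w => INR (length (filter (inVW v w) (@paths G (unitN i)))).

Definition Bmat (G : kgraph_data) (y : Mor G -> R) (beta : R) (i : nat) : mat G :=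
  fun v w => fold_right Rplus 0
    (map (fun lam => exp (- beta * y lam)) (filter (inVW v w) (@paths G (unitN i)))).

(* a + ib is a (complex) eigenvalue of A: A (x + i z) = (a + i b)(x + i z), x + i z <> 0 *)
Definition is_eigenvalue {G : kgraph_data} (A : mat G) (a b : R) : Prop :=
  exists x z : Obj G -> R,
    (exists v, x v <> 0 \/ z v <> 0) /\
    forall v, sumV G (fun u => A v u * x u) = a * x v - b * z v /\
              sumV G (fun u => A v u * z u) = a * z v + b * x v.

Definition is_spectral_radius {G : kgraph_data} (A : mat G) (r : R) : Prop :=
  is_lub (fun t => exists a b, is_eigenvalue A a b /\ t = sqrt (a ^ 2 + b ^ 2)) r.

(* rho(B)^m := prod_i rho(B_i)^{m_i}, given rho i = rho(B_i) *)
Definition rho_pow (k : nat) (rho : nat -> R) (m : nat -> nat) : R :=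
  fold_right Rmult 1 (map (fun i => rho i ^ m i) (seq 0 k)).

Definition is_Rplus_functor {G : kgraph_data} (y : Mor G -> R) : Prop :=
  (forall lam, 0 <= y lam) /\
  (forall v : Obj G, y (idm v) = 0) /\
  (forall a b : Mor G, src a = rng b -> y (comp a b) = y a + y b).

(* x : Omega_k -> Lambda degree-preserving functor; x m n is the image of the
   morphism (m,n) of Omega_k (only meaningful for m <= n in N^k) *)
Definition is_inf_path (k : nat) (G : kgraph_data)
    (x : (nat -> nat) -> (nat -> nat) -> Mor G) : Prop :=
  (forall m, isNk k m -> x m m = idm (rng (x m m))) /\
  (forall m n, isNk k m -> isNk k n -> leN m n ->
     forall i, deg (x m n) i = (n i - m i)%nat) /\
  (forall m n p, isNk k m -> isNk k n -> isNk k p -> leN m n -> leN n p ->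
     src (x m n) = rng (x n p) /\ x m p = comp (x m n) (x n p)).

(* sigma^m x = sigma^n x for all x in Z(v) *)
Definition shift_eq_on (k : nat) (G : kgraph_data) (v : Obj G) (m n : nat -> nat) : Prop :=
  forall x, is_inf_path k G x -> x zeroN zeroN = idm v ->
    forall p q, isNk k p -> isNk k q -> leN p q ->
      x (addN p m) (addN q m) = x (addN p n) (addN q n).

Inductive Per (k : nat) (G : kgraph_data) (v : Obj G) : (nat -> Z) -> Prop :=
| Per_gen : forall m n, isNk k m -> isNk k n -> shift_eq_on k G v m n ->
    Per k G v (fun i => (Z.of_nat (m i) - Z.of_nat (n i))%Z)
| Per_zero : Per k G v (fun _ => 0%Z)
| Per_add : forall z1 z2, Per k G v z1 -> Per k G v z2 -> Per k G v (fun i => (z1 i + z2 i)%Z)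
| Per_opp : forall z, Per k G v z -> Per k G v (fun i => (- z i)%Z).

Definition aperiodic (k : nat) (G : kgraph_data) : Prop :=
  forall (v : Obj G) (z : nat -> Z), Per k G v z -> forall i, z i = 0%Z.

(* Let x be an infinite path in Z(v) and put al = x(0,m), ga = x(0,n).  By
   Perron-Frobenius, the commuting irreducible matrices B_i share a positive
   eigenvector xi with eigenvalues rho(B_i), so the weights
   e^(-beta y(lam)) xi(s(lam)) of the paths lam in v Lambda^q add up to
   rho(B)^q xi(v).  If sigma^m = sigma^n on Z(v), the paths of degree m+n+m and
   m+n+n starting with both al and ga have the same suffixes after al and ga
   respectively.  Extending both families to degree 2m+2n and comparing total
   weights gives e^(-beta y(al)) rho(B)^n = e^(-beta y(ga)) rho(B)^m, i.e. al and
   ga have the same value of y + ln(rho(B)^d)/beta, so m = d(al) = d(ga) = n. *)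

From Stdlib Require Import Reals List ZArith Lra Lia Permutation ClassicalEpsilon FunctionalExtensionality.
Open Scope R_scope.

Definition dec (P : Prop) : bool := if excluded_middle_informative P then true else false.

Lemma dec_true (P : Prop) : dec P = true -> P.
Proof. unfold dec; destruct (excluded_middle_informative P); easy. Qed.
Lemma dec_false (P : Prop) : dec P = false -> ~ P.
Proof. unfold dec; destruct (excluded_middle_informative P); easy. Qed.
Lemma dec_of_true (P : Prop) : P -> dec P = true.
Proof. unfold dec; destruct (excluded_middle_informative P); easy. Qed.
Lemma dec_of_false (P : Prop) : ~ P -> dec P = false.
Proof. unfold dec; destruct (excluded_middle_informative P); easy. Qed.

Definition lsum {A : Type} (l : list A) (g : A -> R) : R := fold_right Rplus 0 (map g l).

Section ListSums.
Context {A : Type}.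
Implicit Types (l : list A) (g h : A -> R).

Lemma lsum_nil g : lsum nil g = 0. Proof. reflexivity. Qed.
Lemma lsum_cons a l g : lsum (a :: l) g = g a + lsum l g. Proof. reflexivity. Qed.

Lemma lsum_app l1 l2 g : lsum (l1 ++ l2) g = lsum l1 g + lsum l2 g.
Proof. induction l1 as [|a l1 IH]; simpl; [unfold lsum; simpl; lra|]. rewrite !lsum_cons, IH. lra. Qed.

Lemma lsum_ext l g h : (forall x, In x l -> g x = h x) -> lsum l g = lsum l h.
Proof.
  induction l as [|a l IH]; intros H; [reflexivity|].
  rewrite !lsum_cons, H, IH; simpl; auto. intros; apply H; simpl; auto.
Qed.

Lemma lsum_perm l1 l2 g : Permutation l1 l2 -> lsum l1 g = lsum l2 g.
Proof. induction 1; rewrite ?lsum_cons; lra. Qed.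

Lemma lsum_map {B} (f : B -> A) (l : list B) g : lsum (map f l) g = lsum l (fun x => g (f x)).
Proof. induction l as [|a l IH]; [reflexivity|]. simpl map. rewrite !lsum_cons, IH. reflexivity. Qed.

Lemma lsum_plus l g h : lsum l (fun x => g x + h x) = lsum l g + lsum l h.
Proof. induction l as [|a l IH]; [unfold lsum; simpl; lra|]. rewrite !lsum_cons, IH. lra. Qed.

Lemma lsum_scal l c g : lsum l (fun x => c * g x) = c * lsum l g.
Proof. induction l as [|a l IH]; [unfold lsum; simpl; lra|]. rewrite !lsum_cons, IH. lra. Qed.

Lemma lsum_scalr l c g : lsum l (fun x => g x * c) = lsum l g * c.
Proof. induction l as [|a l IH]; [unfold lsum; simpl; lra|]. rewrite !lsum_cons, IH. lra. Qed.

Lemma lsum_const l c : lsum l (fun _ => c) = INR (length l) * c.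
Proof.
  induction l as [|a l IH]; [unfold lsum; simpl; lra|].
  rewrite lsum_cons, IH. simpl length. rewrite S_INR. lra.
Qed.

Lemma lsum_zero l : lsum l (fun _ => 0) = 0.
Proof. rewrite lsum_const. lra. Qed.

Lemma lsum_le l g h : (forall x, In x l -> g x <= h x) -> lsum l g <= lsum l h.
Proof.
  induction l as [|a l IH]; intros H; [unfold lsum; simpl; lra|].
  rewrite !lsum_cons. apply Rplus_le_compat; [apply H | apply IH]; simpl; auto.
  intros; apply H; simpl; auto.
Qed.

Lemma lsum_nonneg l g : (forall x, In x l -> 0 <= g x) -> 0 <= lsum l g.
Proof. intro H. rewrite <- (lsum_zero l). now apply lsum_le. Qed.

Lemma lsum_ge_term l g a : (forall x, In x l -> 0 <= g x) -> In a l -> g a <= lsum l g.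
Proof.
  induction l as [|b l IH]; intros H Ha; [destruct Ha|]. rewrite lsum_cons.
  assert (0 <= g b) by (apply H; simpl; auto).
  assert (0 <= lsum l g) by (apply lsum_nonneg; intros; apply H; simpl; auto).
  destruct Ha as [<-|Ha]; [lra|].
  assert (g a <= lsum l g) by (apply IH; auto; intros; apply H; simpl; auto). lra.
Qed.

Lemma lsum_pos l g a : (forall x, In x l -> 0 <= g x) -> In a l -> 0 < g a -> 0 < lsum l g.
Proof. intros H Ha Hg. pose proof (lsum_ge_term l g a H Ha). lra. Qed.

Lemma lsum_pos_inv l g : 0 < lsum l g -> exists a, In a l /\ 0 < g a.
Proof.
  intros H. apply NNPP. intro Hn.
  assert (lsum l g <= lsum l (fun _ => 0)).
  { apply lsum_le. intros x Hx. apply Rnot_lt_le. intro. apply Hn. eauto. }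
  rewrite lsum_zero in H0. lra.
Qed.

Lemma lsum_eq_zero_nonneg l g a :
  (forall x, In x l -> 0 <= g x) -> lsum l g = 0 -> In a l -> g a = 0.
Proof. intros H Hs Ha. pose proof (lsum_ge_term l g a H Ha). pose proof (H a Ha). lra. Qed.

Lemma lsum_filter (p : A -> bool) l g :
  lsum (filter p l) g = lsum l (fun x => if p x then g x else 0).
Proof.
  induction l as [|a l IH]; [reflexivity|]. simpl filter.
  destruct (p a) eqn:E; rewrite ?lsum_cons, IH, ?E; lra.
Qed.

Lemma lsum_flat_map {B} (f : B -> list A) (l : list B) g :
  lsum (flat_map f l) g = lsum l (fun b => lsum (f b) g).
Proof. induction l as [|a l IH]; [reflexivity|]. simpl flat_map. rewrite lsum_app, IH. reflexivity. Qed.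

Lemma lsum_delta l a c : NoDup l -> In a l ->
  lsum l (fun x => if dec (a = x) then c x else 0) = c a.
Proof.
  induction l as [|b l IH]; intros N Ha; [destruct Ha|]. rewrite lsum_cons. inversion N; subst.
  destruct Ha as [<-|Ha].
  - rewrite dec_of_true by auto. rewrite (lsum_ext _ _ (fun _ => 0)), lsum_zero; [lra|].
    intros x Hx. rewrite dec_of_false; auto. intros <-. contradiction.
  - rewrite dec_of_false by (intros ->; contradiction). rewrite IH; auto. lra.
Qed.

End ListSums.

Lemma lsum_swap {A B} (l : list A) (l' : list B) (g : A -> B -> R) :
  lsum l (fun a => lsum l' (fun b => g a b)) = lsum l' (fun b => lsum l (fun a => g a b)).
Proof.
  induction l as [|a l IH]; simpl.
  - rewrite lsum_nil. symmetry. apply lsum_zero.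
  - rewrite lsum_cons, IH, <- lsum_plus. reflexivity.
Qed.

Lemma NoDup_flat_map_disjoint {A B} (f : A -> list B) l : NoDup l ->
  (forall a, In a l -> NoDup (f a)) ->
  (forall a b x, In a l -> In b l -> In x (f a) -> In x (f b) -> a = b) -> NoDup (flat_map f l).
Proof.
  induction l as [|a l IH]; intros N H1 H2; simpl; [constructor|]. inversion N; subst.
  apply NoDup_app; [apply H1; simpl; auto | apply IH; auto; intros; [apply H1 | eapply H2]; simpl; eauto |].
  intros x Hx Hx'. apply in_flat_map in Hx'. destruct Hx' as [b [Hb Hxb]].
  assert (a = b) by (eapply H2; simpl; eauto). subst. contradiction.
Qed.

Lemma modulus_triangle a b c d :
  sqrt ((a + c) ^ 2 + (b + d) ^ 2) <= sqrt (a ^ 2 + b ^ 2) + sqrt (c ^ 2 + d ^ 2).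
Proof.
  assert (H1 : 0 <= a ^ 2 + b ^ 2) by nra. assert (H2 : 0 <= c ^ 2 + d ^ 2) by nra.
  pose proof (sqrt_pos (a ^ 2 + b ^ 2)). pose proof (sqrt_pos (c ^ 2 + d ^ 2)).
  assert (CS : a * c + b * d <= sqrt (a ^ 2 + b ^ 2) * sqrt (c ^ 2 + d ^ 2)).
  { rewrite <- sqrt_mult by auto. apply Rsqr_incr_0_var; [|apply sqrt_pos].
    rewrite Rsqr_sqrt by nra. unfold Rsqr. pose proof (pow2_ge_0 (a * d - b * c)). nra. }
  apply Rsqr_incr_0_var; [|lra].
  rewrite Rsqr_sqrt by (pose proof (pow2_ge_0 (a + c)); pose proof (pow2_ge_0 (b + d)); lra). unfold Rsqr.
  pose proof (sqrt_sqrt _ H1). pose proof (sqrt_sqrt _ H2).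
  replace ((a + c) ^ 2 + (b + d) ^ 2) with ((a ^ 2 + b ^ 2) + (c ^ 2 + d ^ 2) + 2 * (a * c + b * d)) by ring.
  lra.
Qed.

Section FiniteType.
Variable T : Type.
Variable vs : list T.
Hypothesis vs_all : forall v, In v vs.
Variable v0 : T.

Definition fmax (f : T -> R) : R := fold_right Rmax (f v0) (map f vs).
Definition fmin (f : T -> R) : R := fold_right Rmin (f v0) (map f vs).

Lemma fmax_ge f i : f i <= fmax f.
Proof.
  unfold fmax. generalize (vs_all i). clear vs_all. induction vs as [|a l IH]; simpl; intro Hi; [destruct Hi|].
  destruct Hi as [<-|Hi]; [apply Rmax_l|]. eapply Rle_trans; [apply IH; auto | apply Rmax_r].
Qed.

Lemma fmax_attained f : exists i, f i = fmax f.
Proof.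
  unfold fmax. clear vs_all. induction vs as [|a l IH]; cbn [map fold_right]; [eauto|].
  destruct IH as [i Hi]. destruct (Rle_dec (f a) (fold_right Rmax (f v0) (map f l))).
  - rewrite Rmax_right; eauto.
  - rewrite Rmax_left by lra. eauto.
Qed.

Lemma fmin_le f i : fmin f <= f i.
Proof.
  unfold fmin. generalize (vs_all i). clear vs_all. induction vs as [|a l IH]; simpl; intro Hi; [destruct Hi|].
  destruct Hi as [<-|Hi]; [apply Rmin_l|]. eapply Rle_trans; [apply Rmin_r | apply IH; auto].
Qed.

Lemma fmin_attained f : exists i, f i = fmin f.
Proof.
  unfold fmin. clear vs_all. induction vs as [|a l IH]; cbn [map fold_right]; [eauto|].
  destruct IH as [i Hi]. destruct (Rle_dec (f a) (fold_right Rmin (f v0) (map f l))).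
  - rewrite Rmin_left; eauto.
  - rewrite Rmin_right by lra. eauto.
Qed.

Definition mulmv (M : T -> T -> R) (x : T -> R) : T -> R := fun i => lsum vs (fun j => M i j * x j).

Lemma mulmv_ext M x x' i : (forall j, x j = x' j) -> mulmv M x i = mulmv M x' i.
Proof. intro H. apply lsum_ext. intros j _. rewrite H. reflexivity. Qed.

Lemma mulmv_lin M x y a b i :
  mulmv M (fun j => a * x j + b * y j) i = a * mulmv M x i + b * mulmv M y i.
Proof. unfold mulmv. rewrite <- !lsum_scal, <- lsum_plus. apply lsum_ext. intros; ring. Qed.

Lemma mulmv_scal M x c i : mulmv M (fun j => c * x j) i = c * mulmv M x i.
Proof. unfold mulmv. rewrite <- lsum_scal. apply lsum_ext. intros; ring. Qed.

Lemma mulmv_lsum {A} (l : list A) M (f : A -> T -> R) i :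
  mulmv M (fun j => lsum l (fun a => f a j)) i = lsum l (fun a => mulmv M (f a) i).
Proof.
  unfold mulmv. rewrite lsum_swap. apply lsum_ext. intros j _. rewrite <- lsum_scal. reflexivity.
Qed.

Lemma mulmv_pos M x i : (forall j, 0 < M i j) -> (forall j, 0 < x j) -> 0 < mulmv M x i.
Proof.
  intros HM Hx. apply (lsum_pos _ _ v0); auto.
  intros; apply Rlt_le, Rmult_lt_0_compat; auto. apply Rmult_lt_0_compat; auto.
Qed.

Definition has_eigenvalue (B : T -> T -> R) (a b : R) : Prop :=
  exists x z : T -> R, (exists v, x v <> 0 \/ z v <> 0) /\
    forall v, mulmv B x v = a * x v - b * z v /\ mulmv B z v = a * z v + b * x v.

Section PositiveMatrix.
Variable P : T -> T -> R.
Hypothesis P_pos : forall i j, 0 < P i j.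

Definition entry_min := fmin (fun i => fmin (P i)).
Definition entry_max := fmax (fun i => fmax (P i)).

Lemma entry_min_le i j : entry_min <= P i j.
Proof. eapply Rle_trans; [apply (fmin_le _ i) | apply fmin_le]. Qed.
Lemma entry_max_ge i j : P i j <= entry_max.
Proof. eapply Rle_trans; [apply (fmax_ge (P i) j) | apply (fmax_ge (fun i => fmax (P i)))]. Qed.
Lemma entry_min_pos : 0 < entry_min.
Proof.
  unfold entry_min. destruct (fmin_attained (fun i => fmin (P i))) as [i <-].
  destruct (fmin_attained (P i)) as [j <-]. auto.
Qed.

Definition nverts : R := INR (length vs).
Lemma nverts_ge1 : 1 <= nverts.
Proof.
  unfold nverts. pose proof (vs_all v0). destruct vs; [destruct H|].
  simpl length. rewrite S_INR. pose proof (pos_INR (length l)). lra.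
Qed.

(* [(P (P y))_i <= n entry_max^2 sum y] while [P_ij (P y)_j >= entry_min^2 sum y]. *)
Definition kappa : R := entry_min * entry_min / (nverts * entry_max * entry_max).

Lemma kappa_bounds : 0 < kappa <= 1.
Proof.
  unfold kappa. pose proof entry_min_pos. pose proof (entry_min_le v0 v0). pose proof (entry_max_ge v0 v0).
  pose proof nverts_ge1.
  assert (0 < nverts * entry_max * entry_max) by (repeat apply Rmult_lt_0_compat; lra).
  split; [apply Rdiv_lt_0_compat; nra|].
  apply Rmult_le_reg_r with (nverts * entry_max * entry_max); auto.
  unfold Rdiv. rewrite Rmult_assoc, Rinv_l by lra. nra.
Qed.

Lemma mulmv_twice_term_ge y i j : (forall j, 0 < y j) ->
  kappa * mulmv P (mulmv P y) i <= P i j * mulmv P y j.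
Proof.
  intro Hy. pose proof entry_min_pos. pose proof (entry_min_le v0 v0). pose proof (entry_max_ge v0 v0).
  pose proof nverts_ge1. pose proof (entry_min_le i j).
  assert (S0 : 0 < lsum vs y) by (apply (lsum_pos _ _ v0); auto; intros; apply Rlt_le; auto).
  assert (Hup : forall z l, (forall j, 0 <= z j) -> mulmv P z l <= entry_max * lsum vs z).
  { intros z l Hz. unfold mulmv. rewrite <- lsum_scal. apply lsum_le. intros.
    apply Rmult_le_compat_r; auto. apply entry_max_ge. }
  assert (E1 : mulmv P (mulmv P y) i <= entry_max * (nverts * (entry_max * lsum vs y))).
  { eapply Rle_trans; [apply Hup; intro; apply Rlt_le, mulmv_pos; auto|].
    apply Rmult_le_compat_l; [lra|]. unfold nverts. rewrite <- lsum_const.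
    apply lsum_le. intros; apply Hup. intro; apply Rlt_le; auto. }
  assert (E2 : entry_min * lsum vs y <= mulmv P y j).
  { unfold mulmv. rewrite <- lsum_scal. apply lsum_le. intros.
    apply Rmult_le_compat_r; [apply Rlt_le; auto | apply entry_min_le]. }
  assert (E3 : kappa * (entry_max * (nverts * (entry_max * lsum vs y))) = entry_min * (entry_min * lsum vs y)).
  { unfold kappa. field. split; lra. }
  pose proof kappa_bounds. apply Rmult_le_compat_l with (r := kappa) in E1; [|lra].
  assert (entry_min * (entry_min * lsum vs y) <= P i j * mulmv P y j) by (apply Rmult_le_compat; nra).
  lra.
Qed.

Fixpoint iterate (N : nat) : T -> R :=
  match N with O => mulmv P (fun _ => 1) | S N' => mulmv P (iterate N') end.

Lemma iterate_pos N i : 0 < iterate N i.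
Proof. revert i; induction N; intro i; simpl; apply mulmv_pos; auto. intros; lra. Qed.

Lemma iterate_weight N i j : kappa * iterate (S N) i <= P i j * iterate N j.
Proof.
  destruct N; simpl.
  - apply mulmv_twice_term_ge. intros; lra.
  - apply mulmv_twice_term_ge, iterate_pos.
Qed.

Definition ratio (N : nat) (i : T) : R := iterate (S N) i / iterate N i.
Definition ratio_max (N : nat) : R := fmax (ratio N).
Definition ratio_min (N : nat) : R := fmin (ratio N).

Lemma ratio_pos N i : 0 < ratio N i.
Proof. apply Rdiv_lt_0_compat; apply iterate_pos. Qed.
Lemma iterate_S N j : iterate (S N) j = ratio N j * iterate N j.
Proof. unfold ratio. field. apply Rgt_not_eq, iterate_pos. Qed.
Lemma ratio_min_le_max N : ratio_min N <= ratio_max N.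
Proof. eapply Rle_trans; [apply (fmin_le _ v0) | apply fmax_ge]. Qed.

Lemma weighted_average_bounds (w qq : T -> R) (kk W : R) :
  (forall j, 0 <= w j) -> W = lsum vs w -> (forall j, kk * W <= w j) ->
  W * (kk * fmax qq + (1 - kk) * fmin qq) <= lsum vs (fun j => w j * qq j) <=
  W * (kk * fmin qq + (1 - kk) * fmax qq).
Proof.
  intros Hw HW Hk. set (lo := fmin qq). set (hi := fmax qq).
  assert (Hq : forall j, lo <= qq j <= hi) by (intro j; split; [apply fmin_le | apply fmax_ge]).
  destruct (fmin_attained qq) as [j0 Hj0]. destruct (fmax_attained qq) as [j1 Hj1].
  fold lo in Hj0. fold hi in Hj1. split.
  - assert (lsum vs (fun j => w j * qq j) = W * lo + lsum vs (fun j => w j * (qq j - lo))).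
    { rewrite HW, <- lsum_scalr, <- lsum_plus. apply lsum_ext; intros; ring. }
    assert (w j1 * (qq j1 - lo) <= lsum vs (fun j => w j * (qq j - lo))).
    { apply (lsum_ge_term _ (fun j => w j * (qq j - lo))); auto.
      intros. apply Rmult_le_pos; auto. specialize (Hq x); lra. }
    specialize (Hk j1). specialize (Hq j1).
    assert (kk * W * (qq j1 - lo) <= w j1 * (qq j1 - lo)) by (apply Rmult_le_compat_r; lra). nra.
  - assert (lsum vs (fun j => w j * qq j) + lsum vs (fun j => w j * (hi - qq j)) = W * hi).
    { rewrite <- lsum_plus, HW, <- lsum_scalr. apply lsum_ext; intros; ring. }
    assert (w j0 * (hi - qq j0) <= lsum vs (fun j => w j * (hi - qq j))).
    { apply (lsum_ge_term _ (fun j => w j * (hi - qq j))); auto.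
      intros. apply Rmult_le_pos; auto. specialize (Hq x); lra. }
    specialize (Hk j0). specialize (Hq j0).
    assert (kk * W * (hi - qq j0) <= w j0 * (hi - qq j0)) by (apply Rmult_le_compat_r; lra). nra.
Qed.

Lemma ratio_S_bounds N i :
  kappa * ratio_max N + (1 - kappa) * ratio_min N <= ratio (S N) i <=
  kappa * ratio_min N + (1 - kappa) * ratio_max N.
Proof.
  assert (Hw : forall j, 0 <= P i j * iterate N j)
    by (intro; apply Rlt_le, Rmult_lt_0_compat; auto; apply iterate_pos).
  pose proof (weighted_average_bounds (fun j => P i j * iterate N j) (ratio N) kappa (iterate (S N) i)
    Hw eq_refl (iterate_weight N i)) as [B1 B2].
  assert (E : ratio (S N) i * iterate (S N) i = lsum vs (fun j => P i j * iterate N j * ratio N j)).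
  { rewrite <- iterate_S. change (iterate (S (S N)) i) with (mulmv P (iterate (S N)) i).
    apply lsum_ext. intros j _. rewrite iterate_S. ring. }
  pose proof (iterate_pos (S N) i).
  split; apply (Rmult_le_reg_r (iterate (S N) i)); auto; fold (ratio_max N) (ratio_min N) in *; nra.
Qed.

Lemma ratio_max_decr N : ratio_max (S N) <= ratio_max N.
Proof.
  destruct (fmax_attained (ratio (S N))) as [i Hi]. unfold ratio_max at 1. rewrite <- Hi.
  pose proof (ratio_S_bounds N i). pose proof (ratio_min_le_max N). pose proof kappa_bounds. nra.
Qed.

Lemma ratio_min_incr N : ratio_min N <= ratio_min (S N).
Proof.
  destruct (fmin_attained (ratio (S N))) as [i Hi]. unfold ratio_min at 2. rewrite <- Hi.
  pose proof (ratio_S_bounds N i). pose proof (ratio_min_le_max N). pose proof kappa_bounds. nra.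
Qed.

Definition spread (N : nat) : R := ratio_max N - ratio_min N.

Lemma spread_contract N : spread (S N) <= (1 - kappa) * spread N.
Proof.
  unfold spread, ratio_max at 1, ratio_min at 1.
  destruct (fmax_attained (ratio (S N))) as [i <-]. destruct (fmin_attained (ratio (S N))) as [j <-].
  pose proof (ratio_S_bounds N i). pose proof (ratio_S_bounds N j). pose proof (ratio_min_le_max N).
  pose proof kappa_bounds. nra.
Qed.

Lemma ratio_min0_le N : ratio_min 0 <= ratio_min N.
Proof. induction N; [lra|]. pose proof (ratio_min_incr N). lra. Qed.

Lemma ratio_min0_pos : 0 < ratio_min 0.
Proof. unfold ratio_min. destruct (fmin_attained (ratio 0)) as [i <-]. apply ratio_pos. Qed.

Fixpoint spread_sum (N : nat) : R := match N with O => 0 | S N' => spread_sum N' + spread N' end.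

Lemma spread_sum_bound N : spread_sum N <= spread 0 / kappa.
Proof.
  pose proof kappa_bounds.
  assert (Hinv : spread_sum N + spread N / kappa <= spread 0 / kappa).
  { induction N as [|N IH]; simpl; [lra|].
    pose proof (spread_contract N).
    assert (spread (S N) / kappa <= (1 - kappa) * spread N / kappa)
      by (unfold Rdiv; apply Rmult_le_compat_r; [apply Rlt_le, Rinv_0_lt_compat|]; lra).
    assert ((1 - kappa) * spread N / kappa = spread N / kappa - spread N) by (field; lra). lra. }
  assert (0 <= spread N / kappa).
  { unfold spread, Rdiv. pose proof (ratio_min_le_max N).
    apply Rmult_le_pos; [| apply Rlt_le, Rinv_0_lt_compat]; lra. }
  lra.
Qed.

Fixpoint prod_max (N : nat) : R := match N with O => 1 | S N' => prod_max N' * ratio_max N' end.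
Fixpoint prod_min (N : nat) : R := match N with O => 1 | S N' => prod_min N' * ratio_min N' end.

Lemma prod_min_pos N : 0 < prod_min N.
Proof.
  induction N; simpl; [lra|]. pose proof (ratio_min0_le N). pose proof ratio_min0_pos. nra.
Qed.

Lemma prod_max_pos N : 0 < prod_max N.
Proof.
  induction N; simpl; [lra|]. pose proof (ratio_min0_le N). pose proof ratio_min0_pos.
  pose proof (ratio_min_le_max N). nra.
Qed.

(* [ratio_max / ratio_min <= 1 + spread / ratio_min 0 <= exp (spread / ratio_min 0)],
   and the spreads are summable. *)
Lemma prod_max_le N : prod_max N <= prod_min N * exp (spread_sum N / ratio_min 0).
Proof.
  induction N as [|N IH]; simpl.
  - unfold Rdiv. rewrite Rmult_0_l, exp_0. lra.
  - pose proof (ratio_min0_le N). pose proof ratio_min0_pos. pose proof (ratio_min_le_max N).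
    pose proof (prod_max_pos N). pose proof (prod_min_pos N).
    set (t := spread N / ratio_min 0).
    assert (Ht : ratio_max N <= ratio_min N * exp t).
    { pose proof (exp_ineq1_le t).
      assert (0 <= t) by (unfold t, spread, Rdiv; apply Rmult_le_pos; [| apply Rlt_le, Rinv_0_lt_compat]; lra).
      assert (spread N <= ratio_min N * t).
      { unfold t. apply (Rmult_le_reg_r (ratio_min 0)); auto.
        unfold Rdiv. rewrite !Rmult_assoc, Rinv_l by lra. unfold spread. nra. }
      unfold spread in *. nra. }
    replace ((spread_sum N + spread N) / ratio_min 0) with (spread_sum N / ratio_min 0 + t)
      by (unfold t; field; lra).
    rewrite exp_plus. pose proof (exp_pos (spread_sum N / ratio_min 0)). pose proof (exp_pos t).
    apply Rle_trans with (prod_min N * exp (spread_sum N / ratio_min 0) * ratio_max N);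
      [apply Rmult_le_compat_r; lra|].
    replace (prod_min N * ratio_min N * (exp (spread_sum N / ratio_min 0) * exp t))
      with (prod_min N * exp (spread_sum N / ratio_min 0) * (ratio_min N * exp t)) by ring.
    apply Rmult_le_compat_l; [nra | auto].
Qed.

Definition prod_gap : R := exp (spread 0 / kappa / ratio_min 0).

Lemma prod_max_le_gap N : prod_max N <= prod_min N * prod_gap.
Proof.
  eapply Rle_trans; [apply prod_max_le|]. apply Rmult_le_compat_l; [apply Rlt_le, prod_min_pos|].
  unfold prod_gap. pose proof ratio_min0_pos.
  assert (spread_sum N / ratio_min 0 <= spread 0 / kappa / ratio_min 0).
  { unfold Rdiv at 1 3. apply Rmult_le_compat_r; [apply Rlt_le, Rinv_0_lt_compat; auto|].
    apply spread_sum_bound. }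
  destruct (Req_dec (spread_sum N / ratio_min 0) (spread 0 / kappa / ratio_min 0)) as [->|]; [lra|].
  left. apply exp_increasing. lra.
Qed.

Definition normalised (N : nat) (i : T) : R := iterate N i / prod_max N.

Lemma iterate_lower N i : iterate 0 i * prod_min N <= iterate N i.
Proof.
  induction N as [|N IH]; simpl prod_min; [lra|]. rewrite iterate_S.
  pose proof (fmin_le (ratio N) i). fold (ratio_min N) in H.
  pose proof (iterate_pos N i). pose proof (prod_min_pos N). pose proof (ratio_min0_le N).
  pose proof ratio_min0_pos. pose proof (iterate_pos 0 i). nra.
Qed.

Lemma normalised_lower N i : iterate 0 i / prod_gap <= normalised N i.
Proof.
  unfold normalised. pose proof (iterate_lower N i). pose proof (prod_max_le_gap N).
  pose proof (prod_max_pos N). pose proof (prod_min_pos N). pose proof (exp_pos (spread 0 / kappa / ratio_min 0)).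
  fold prod_gap in H3. pose proof (iterate_pos 0 i).
  apply (Rmult_le_reg_r (prod_gap * prod_max N)); [nra|].
  unfold Rdiv. replace (iterate 0 i * / prod_gap * (prod_gap * prod_max N)) with (iterate 0 i * prod_max N) by (field; lra).
  replace (iterate N i * / prod_max N * (prod_gap * prod_max N)) with (iterate N i * prod_gap) by (field; lra).
  nra.
Qed.

Lemma normalised_decr N i : normalised (S N) i <= normalised N i.
Proof.
  unfold normalised. simpl prod_max. rewrite iterate_S. pose proof (fmax_ge (ratio N) i). fold (ratio_max N) in H.
  pose proof (iterate_pos N i). pose proof (prod_max_pos N). pose proof (ratio_pos N i).
  apply (Rmult_le_reg_r (prod_max N * ratio_max N)); [nra|].
  unfold Rdiv. replace (ratio N i * iterate N i * / (prod_max N * ratio_max N) * (prod_max N * ratio_max N))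
    with (ratio N i * iterate N i) by (field; lra).
  replace (iterate N i * / prod_max N * (prod_max N * ratio_max N)) with (iterate N i * ratio_max N) by (field; lra).
  nra.
Qed.

Lemma normalised_step N i : mulmv P (normalised N) i = ratio_max N * normalised (S N) i.
Proof.
  unfold normalised. simpl prod_max. pose proof (prod_max_pos N).
  assert (0 < ratio_max N) by (pose proof (ratio_min_le_max N); pose proof (ratio_min0_le N); pose proof ratio_min0_pos; lra).
  transitivity (iterate (S N) i / prod_max N).
  - unfold Rdiv. simpl iterate. unfold mulmv. rewrite <- lsum_scalr. apply lsum_ext; intros; ring.
  - field. lra.
Qed.

Lemma lsum_cv {A} (l : list A) (u : nat -> A -> R) (lim : A -> R) :
  (forall j, In j l -> Un_cv (fun N => u N j) (lim j)) -> Un_cv (fun N => lsum l (u N)) (lsum l lim).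
Proof.
  induction l as [|a l IH]; intros H.
  - intros e He. exists O. intros. unfold R_dist, lsum. simpl. rewrite Rminus_diag, Rabs_R0. lra.
  - apply (CV_plus (fun N => u N a) (fun N => lsum l (u N))); [apply H; simpl; auto|].
    apply IH. intros; apply H; simpl; auto.
Qed.

Theorem perron_positive : exists xi r, (forall i, 0 < xi i) /\ 0 < r /\ forall i, mulmv P xi i = r * xi i.
Proof.
  assert (Hlb : forall (u : nat -> R) c, (forall N, c <= u N) -> has_lb u).
  { intros u c H. exists (- c). intros x [n ->]. unfold opp_seq. specialize (H n). lra. }
  assert (Hconst : forall c, Un_cv (fun _ => c) c).
  { intros c e He. exists O. intros. unfold R_dist. rewrite Rminus_diag, Rabs_R0. lra. }
  set (xi := fun i => proj1_sig (decreasing_cv (fun N => normalised N i) (fun N => normalised_decr N i)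
                                  (Hlb _ _ (fun N => normalised_lower N i)))).
  assert (Hxi : forall i, Un_cv (fun N => normalised N i) (xi i)) by (intro i; unfold xi; apply proj2_sig).
  assert (Hmax_lb : forall N, ratio_min 0 <= ratio_max N)
    by (intro N; pose proof (ratio_min_le_max N); pose proof (ratio_min0_le N); lra).
  destruct (decreasing_cv ratio_max ratio_max_decr (Hlb _ _ Hmax_lb)) as [r Hr].
  exists xi, r. split; [|split].
  - intro i. pose proof (Rle_cv_lim (fun N => normalised_lower N i) (Hconst _) (Hxi i)).
    assert (0 < iterate 0 i / prod_gap) by (apply Rdiv_lt_0_compat; [apply iterate_pos | apply exp_pos]). lra.
  - pose proof (Rle_cv_lim Hmax_lb (Hconst _) Hr). pose proof ratio_min0_pos. lra.
  - intro i. apply (UL_sequence (fun N => mulmv P (normalised N) i)).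
    + apply lsum_cv. intros j _. apply (CV_mult (fun _ => P i j) (fun N => normalised N j)); auto.
    + rewrite (functional_extensionality _ _ (fun N => normalised_step N i)).
      apply CV_mult; auto. intros e He. destruct (Hxi i e He) as [M HM].
      exists M. intros n Hn. apply HM. lia.
Qed.

End PositiveMatrix.

Lemma positive_eigenvector_unique (P : T -> T -> R) xi eta r :
  (forall i j, 0 < P i j) -> (forall i, 0 < xi i) ->
  (forall i, mulmv P xi i = r * xi i) -> (forall i, mulmv P eta i = r * eta i) ->
  exists c, forall i, eta i = c * xi i.
Proof.
  intros Pp Hx Ex Ee. set (c := fmin (fun i => eta i / xi i)). exists c.
  destruct (fmin_attained (fun i => eta i / xi i)) as [i0 Hi0]. fold c in Hi0.
  (* [eta - c xi] is a nonnegative eigenvector vanishing at [i0]; positivity of [P] kills it *)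
  set (z := fun i => 1 * eta i + (- c) * xi i).
  assert (Hz : forall i, 0 <= z i).
  { intro i. unfold z. pose proof (fmin_le (fun i => eta i / xi i) i). fold c in H. pose proof (Hx i).
    assert (c * xi i <= eta i).
    { apply (Rmult_le_reg_r (/ xi i)); [apply Rinv_0_lt_compat; auto|].
      rewrite Rmult_assoc, Rinv_r by lra. lra. }
    lra. }
  assert (Hz0 : z i0 = 0) by (unfold z; rewrite <- Hi0; field; apply Rgt_not_eq, Hx).
  assert (Ez : mulmv P z i0 = 0).
  { unfold z. rewrite mulmv_lin, Ex, Ee. unfold z in Hz0. nra. }
  intro i. assert (P i0 i * z i = 0).
  { apply (lsum_eq_zero_nonneg vs (fun j => P i0 j * z j)); auto.
    intros; apply Rmult_le_pos; [apply Rlt_le; auto | auto]. }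
  assert (z i = 0) by (pose proof (Pp i0 i); destruct (Rmult_integral _ _ H); auto; lra).
  unfold z in H0. lra.
Qed.

Lemma lsum_modulus_le (w p q : T -> R) : (forall j, 0 <= w j) ->
  sqrt ((lsum vs (fun j => w j * p j)) ^ 2 + (lsum vs (fun j => w j * q j)) ^ 2) <=
  lsum vs (fun j => w j * sqrt (p j ^ 2 + q j ^ 2)).
Proof.
  intro Hw. clear vs_all. induction vs as [|a l IH].
  - unfold lsum; simpl. replace (0 * (0 * 1) + 0 * (0 * 1)) with 0 by ring. rewrite sqrt_0. lra.
  - rewrite !lsum_cons. eapply Rle_trans; [apply modulus_triangle | apply Rplus_le_compat; auto].
    replace ((w a * p a) ^ 2 + (w a * q a) ^ 2) with ((w a) ^ 2 * (p a ^ 2 + q a ^ 2)) by ring.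
    rewrite sqrt_mult by (apply pow2_ge_0 || (pose proof (pow2_ge_0 (p a)); pose proof (pow2_ge_0 (q a)); lra)).
    rewrite sqrt_pow2 by apply Hw. lra.
Qed.

(* Every eigenvector [x + i z] is dominated by a multiple [t xi] touching it
   at some [v1]; comparing both sides of the eigen-equation at [v1] gives
   [|a + ib| <= c]. *)
Lemma positive_eigenvector_spectral_radius (B : T -> T -> R) xi c :
  (forall u v, 0 <= B u v) -> (forall v, 0 < xi v) -> 0 <= c -> (forall v, mulmv B xi v = c * xi v) ->
  is_lub (fun t => exists a b, has_eigenvalue B a b /\ t = sqrt (a ^ 2 + b ^ 2)) c.
Proof.
  intros HB Hx Hc Heig. split.
  - intros t [a [b [[x [z [[v Hv] He]]] ->]]].
    set (f := fun v => sqrt (x v ^ 2 + z v ^ 2) / xi v).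
    destruct (fmax_attained f) as [v1 Hv1]. set (t := fmax f) in *.
    assert (Hb : forall u, sqrt (x u ^ 2 + z u ^ 2) <= t * xi u).
    { intro u. pose proof (fmax_ge f u) as H. fold t in H. unfold f in H. pose proof (Hx u).
      apply (Rmult_le_compat_r (xi u)) in H; [|lra].
      unfold Rdiv in H. rewrite Rmult_assoc, Rinv_l, Rmult_1_r in H by lra. lra. }
    assert (Htp : 0 < t).
    { assert (0 < f v).
      { unfold f. apply Rdiv_lt_0_compat; [apply sqrt_lt_R0 | apply Hx].
        pose proof (pow2_ge_0 (x v)). pose proof (pow2_ge_0 (z v)).
        destruct Hv as [Hv|Hv]; apply Rsqr_pos_lt in Hv; unfold Rsqr in Hv; nra. }
      pose proof (fmax_ge f v). fold t in H0. lra. }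
    assert (Hu1 : sqrt (x v1 ^ 2 + z v1 ^ 2) = t * xi v1)
      by (rewrite <- Hv1; unfold f; field; apply Rgt_not_eq, Hx).
    destruct (He v1) as [E1 E2].
    assert (Hn : sqrt ((a * x v1 - b * z v1) ^ 2 + (a * z v1 + b * x v1) ^ 2) =
                 sqrt (a ^ 2 + b ^ 2) * sqrt (x v1 ^ 2 + z v1 ^ 2))
      by (rewrite <- sqrt_mult by nra; f_equal; ring).
    rewrite <- E1, <- E2 in Hn.
    pose proof (lsum_modulus_le (B v1) x z (HB v1)) as Ht.
    assert (lsum vs (fun j => B v1 j * sqrt (x j ^ 2 + z j ^ 2)) <= lsum vs (fun j => B v1 j * (t * xi j)))
      by (apply lsum_le; intros j _; apply Rmult_le_compat_l; auto).
    assert (lsum vs (fun j => B v1 j * (t * xi j)) = t * (c * xi v1))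
      by (rewrite <- Heig; unfold mulmv; rewrite <- lsum_scal; apply lsum_ext; intros; ring).
    unfold mulmv in Hn. rewrite Hn, Hu1 in Ht. pose proof (Hx v1). pose proof (sqrt_pos (a ^ 2 + b ^ 2)).
    apply (Rmult_le_reg_r (t * xi v1)); [apply Rmult_lt_0_compat; auto|]. lra.
  - intros ub Hub. apply Hub. exists c, 0. split.
    + exists xi, (fun _ => 0). split; [exists v0; left; apply Rgt_not_eq, Hx|].
      intro v. split; [rewrite <- (Heig v); ring|].
      unfold mulmv. rewrite (lsum_ext _ _ (fun _ => 0)), lsum_zero; [ring | intros; ring].
    + replace (c ^ 2 + 0 ^ 2) with (c ^ 2) by ring. rewrite sqrt_pow2; auto.
Qed.

End FiniteType.

Lemma isNk_zero k : isNk k zeroN.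
Proof. intros i _; reflexivity. Qed.
Lemma isNk_add k m n : isNk k m -> isNk k n -> isNk k (addN m n).
Proof. intros H1 H2 i Hi. unfold addN. rewrite H1, H2; auto. Qed.
Lemma isNk_sub k m n : isNk k m -> isNk k n -> isNk k (fun i => (m i - n i)%nat).
Proof. intros H1 H2 i Hi. rewrite H1; auto. Qed.
Lemma isNk_unitN k i : (i < k)%nat -> isNk k (unitN i).
Proof. intros H j Hj. unfold unitN. destruct (Nat.eqb_spec j i); [lia | auto]. Qed.

Fixpoint sumN (q : nat -> nat) (j : nat) : nat :=
  match j with O => O | S j' => (q j' + sumN q j')%nat end.

Lemma sumN_ge q j i : (i < j)%nat -> (q i <= sumN q j)%nat.
Proof.
  induction j as [|j IH]; simpl; intros; [lia|].
  destruct (Nat.eq_dec i j); [subst; lia|]. specialize (IH ltac:(lia)). lia.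
Qed.

Lemma sumN_mono p q j : (forall i, (p i <= q i)%nat) -> (sumN p j <= sumN q j)%nat.
Proof. intro H; induction j; simpl; auto. specialize (H j). lia. Qed.

Lemma sumN_zero q j : (forall i, (i < j)%nat -> q i = 0%nat) -> sumN q j = 0%nat.
Proof.
  induction j as [|j IH]; intro H; simpl; auto.
  rewrite H, IH by (lia || (intros; apply H; lia)). reflexivity.
Qed.

Lemma sumN_add a b j : sumN (addN a b) j = (sumN a j + sumN b j)%nat.
Proof. induction j; simpl; auto. rewrite IHj. unfold addN. lia. Qed.

Lemma sumN_unitN i j : sumN (unitN i) j = if Nat.ltb i j then 1%nat else 0%nat.
Proof.
  induction j; simpl; auto. rewrite IHj. unfold unitN.
  destruct (Nat.eqb_spec j i), (Nat.ltb_spec i j), (Nat.ltb_spec i (S j)); lia.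
Qed.

Lemma rho_pow_add k rho a b : rho_pow k rho (addN a b) = rho_pow k rho a * rho_pow k rho b.
Proof.
  unfold rho_pow. induction (seq 0 k) as [|i l IH]; simpl; [ring|].
  rewrite IH. unfold addN. rewrite pow_add. ring.
Qed.

Lemma rho_pow_pos k rho q : (forall i, (i < k)%nat -> 0 < rho i) -> 0 < rho_pow k rho q.
Proof.
  intro H. unfold rho_pow. assert (Hl : forall i, In i (seq 0 k) -> 0 < rho i)
    by (intros i Hi; apply in_seq in Hi; apply H; lia).
  induction (seq 0 k) as [|i l IH]; simpl; [lra|].
  apply Rmult_lt_0_compat; [apply pow_lt, Hl | apply IH; intros; apply Hl]; simpl; auto.
Qed.

Lemma rho_pow_zero k rho q : (forall i, (i < k)%nat -> q i = 0%nat) -> rho_pow k rho q = 1.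
Proof.
  intro H. unfold rho_pow. assert (Hl : forall i, In i (seq 0 k) -> q i = 0%nat)
    by (intros i Hi; apply in_seq in Hi; apply H; lia).
  induction (seq 0 k) as [|i l IH]; simpl; [reflexivity|].
  rewrite Hl by (simpl; auto). rewrite IH by (intros; apply Hl; simpl; auto). ring.
Qed.

Lemma rho_pow_unitN k rho i : (i < k)%nat -> rho_pow k rho (unitN i) = rho i.
Proof.
  intro Hi. unfold rho_pow. assert (Hin : In i (seq 0 k)) by (apply in_seq; lia).
  pose proof (seq_NoDup k 0) as Hnd. induction (seq 0 k) as [|j l IH]; [destruct Hin|].
  inversion Hnd as [|? ? Hj Hnd']; subst. simpl. unfold unitN at 1.
  destruct (Nat.eqb_spec j i) as [->|Hne].
  - assert (Hrest : forall l, ~ In i l -> fold_right Rmult 1 (map (fun j => rho j ^ unitN i j) l) = 1).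
    { clear. induction l as [|j l IH]; intro Hl; simpl; [reflexivity|].
      unfold unitN at 1. destruct (Nat.eqb_spec j i); [subst; simpl in Hl; tauto|].
      rewrite IH by (simpl in Hl; tauto). ring. }
    rewrite Hrest by auto. ring.
  - destruct Hin as [->|Hin]; [contradiction|]. rewrite IH by auto. ring.
Qed.

Lemma leN_addN_r a b : leN a (addN b a).
Proof. intro i. unfold addN. lia. Qed.

Lemma leN_trans_addN a b c : leN a b -> leN a (addN b c).
Proof. intros H i. specialize (H i). unfold addN. lia. Qed.

Section KGraph.
Variable k : nat.
Variable G : kgraph_data.
Hypothesis HG : is_finite_kgraph k G.

Lemma idm_rng v : rng (@idm G v) = v. Proof. apply (proj1 HG). Qed.
Lemma idm_src v : src (@idm G v) = v. Proof. apply (proj1 HG). Qed.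
Lemma comp_rng (a b : Mor G) : src a = rng b -> rng (comp a b) = rng a.
Proof. intro H; apply (proj1 (proj2 HG) a b H). Qed.
Lemma comp_src (a b : Mor G) : src a = rng b -> src (comp a b) = src b.
Proof. intro H; apply (proj1 (proj2 HG) a b H). Qed.
Lemma comp_assoc (a b c : Mor G) :
  src a = rng b -> src b = rng c -> comp (comp a b) c = comp a (comp b c).
Proof. apply (proj1 (proj2 (proj2 HG))). Qed.
Lemma comp_idl (a : Mor G) : comp (idm (rng a)) a = a. Proof. apply (proj1 (proj2 (proj2 (proj2 HG)))). Qed.
Lemma comp_idr (a : Mor G) : comp a (idm (src a)) = a. Proof. apply (proj1 (proj2 (proj2 (proj2 HG)))). Qed.
Lemma deg_isNk (a : Mor G) : isNk k (deg a). Proof. apply HG. Qed.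
Lemma deg_idm v i : deg (@idm G v) i = 0%nat. Proof. apply HG. Qed.
Lemma deg_comp (a b : Mor G) : src a = rng b -> forall i, deg (comp a b) i = (deg a i + deg b i)%nat.
Proof. apply HG. Qed.
Lemma unique_factorisation (lam : Mor G) (m n : nat -> nat) : isNk k m -> isNk k n ->
  (forall i, deg lam i = (m i + n i)%nat) ->
  exists eta nu : Mor G,
    src eta = rng nu /\ lam = comp eta nu /\
    (forall i, deg eta i = m i) /\ (forall i, deg nu i = n i) /\
    (forall eta' nu' : Mor G, src eta' = rng nu' -> lam = comp eta' nu' ->
       (forall i, deg eta' i = m i) -> (forall i, deg nu' i = n i) -> eta' = eta /\ nu' = nu).
Proof. apply HG. Qed.
Lemma verts_nodup : NoDup (@verts G). Proof. apply HG. Qed.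
Lemma verts_all v : In v (@verts G). Proof. apply HG. Qed.
Lemma paths_nodup n : isNk k n -> NoDup (@paths G n). Proof. intro H; apply HG; auto. Qed.
Lemma paths_in n lam : isNk k n -> In lam (@paths G n) <-> (forall i, deg lam i = n i).
Proof. intro H; apply HG; auto. Qed.

Lemma deg_zero_idm lam : (forall i, deg lam i = 0%nat) -> lam = @idm G (rng lam).
Proof.
  intro H0.
  destruct (unique_factorisation lam zeroN zeroN (isNk_zero k) (isNk_zero k))
    as (e & n & _ & _ & _ & _ & U); [intro i; rewrite H0; reflexivity|].
  destruct (U (idm (rng lam)) lam) as [E1 _]; auto.
  { rewrite idm_src; auto. } { rewrite comp_idl; auto. } { intro; apply deg_idm. }
  destruct (U lam (idm (src lam))) as [E2 _]; auto.
  { rewrite idm_rng; auto. } { rewrite comp_idr; auto. } { intro; apply deg_idm. }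
  congruence.
Qed.

Definition is_factorisation (lam : Mor G) (m : nat -> nat) (p : Mor G * Mor G) : Prop :=
  src (fst p) = rng (snd p) /\ lam = comp (fst p) (snd p) /\ forall i, deg (fst p) i = m i.

(* Junk value [(lam, lam)] when [m] is not below [deg lam]. *)
Definition factor (lam : Mor G) (m : nat -> nat) : Mor G * Mor G :=
  match excluded_middle_informative (exists p, is_factorisation lam m p) with
  | left H => proj1_sig (constructive_indefinite_description _ H)
  | right _ => (lam, lam)
  end.

Definition prefix m lam := fst (factor lam m).
Definition suffix m lam := snd (factor lam m).

Lemma factor_spec lam m : (exists p, is_factorisation lam m p) -> is_factorisation lam m (factor lam m).
Proof.
  intro H. unfold factor. destruct (excluded_middle_informative _); [|contradiction].
  apply (proj2_sig (constructive_indefinite_description _ e)).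
Qed.

Lemma factor_unique lam m eta nu : isNk k m ->
  is_factorisation lam m (eta, nu) -> factor lam m = (eta, nu).
Proof.
  intros Hm Hs. assert (Hf := factor_spec lam m (ex_intro _ _ Hs)).
  destruct (factor lam m) as [eta' nu']. destruct Hs as (S1 & L1 & D1). destruct Hf as (S2 & L2 & D2).
  simpl in *.
  assert (Hd : forall i, deg lam i = (m i + deg nu i)%nat).
  { intro i. rewrite L1, deg_comp, D1 by auto. reflexivity. }
  destruct (unique_factorisation lam m (deg nu) Hm (deg_isNk nu) Hd) as (e0 & n0 & _ & _ & _ & _ & U).
  destruct (U eta nu S1 L1 D1 (fun i => eq_refl)) as [-> ->].
  destruct (U eta' nu' S2 L2 D2) as [-> ->]; auto.
  intro i. pose proof (Hd i) as H. rewrite L2, deg_comp, D2 in H by auto. lia.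
Qed.

Lemma prefix_suffix m lam : isNk k m -> (forall i, (m i <= deg lam i)%nat) ->
  src (prefix m lam) = rng (suffix m lam) /\ lam = comp (prefix m lam) (suffix m lam) /\
  (forall i, deg (prefix m lam) i = m i) /\ (forall i, deg (suffix m lam) i = (deg lam i - m i)%nat).
Proof.
  intros Hm Hle.
  destruct (unique_factorisation lam m (fun i => (deg lam i - m i)%nat) Hm (isNk_sub _ _ _ (deg_isNk lam) Hm))
    as (e & n & S & L & D & _ & _); [intro i; specialize (Hle i); lia|].
  pose proof (factor_spec lam m (ex_intro _ (e, n) (conj S (conj L D)))) as (S' & L' & D').
  unfold prefix, suffix. split; [|split; [|split]]; auto.
  intro i. pose proof (f_equal (fun l => deg l i) L') as E. simpl in E.
  rewrite deg_comp, D' in E by auto. lia.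
Qed.

Lemma prefix_comp_exact m a b : isNk k m -> src a = rng b -> (forall i, deg a i = m i) ->
  prefix m (comp a b) = a /\ suffix m (comp a b) = b.
Proof. intros Hm S D. unfold prefix, suffix. rewrite (factor_unique (comp a b) m a b); auto. split; auto. Qed.

Lemma prefix_comp m a b : isNk k m -> (forall i, (m i <= deg a i)%nat) -> src a = rng b ->
  prefix m (comp a b) = prefix m a.
Proof.
  intros Hm Hle S. destruct (prefix_suffix m a Hm Hle) as (S1 & L1 & D1 & _).
  assert (Ssuf : src (suffix m a) = rng b) by (rewrite <- S; rewrite L1 at 2; rewrite comp_src; auto).
  rewrite L1 at 1. rewrite comp_assoc by auto.
  apply prefix_comp_exact; auto. rewrite comp_rng; auto.
Qed.

Definition path_sum (n : nat -> nat) (v : Obj G) (h : Mor G -> R) : R :=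
  lsum (filter (fun l => dec (rng l = v)) (paths n)) h.

Lemma in_path_sum n v (l : Mor G) : isNk k n ->
  In l (filter (fun l => dec (rng l = v)) (paths n)) <-> (forall i, deg l i = n i) /\ rng l = v.
Proof.
  intro Hn. rewrite filter_In, paths_in by auto.
  split; intros [H1 H2]; split; auto; [apply dec_true | apply dec_of_true]; auto.
Qed.

Lemma path_sum_ext n v h1 h2 : isNk k n ->
  (forall l, (forall i, deg l i = n i) -> rng l = v -> h1 l = h2 l) -> path_sum n v h1 = path_sum n v h2.
Proof. intros Hn H. apply lsum_ext. intros x Hx. apply in_path_sum in Hx as [Hd Hr]; auto. Qed.

Lemma path_sum_scal n v c h : path_sum n v (fun l => c * h l) = c * path_sum n v h.
Proof. apply lsum_scal. Qed.

Lemma path_sum_zero n v : path_sum n v (fun _ => 0) = 0.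
Proof. apply lsum_zero. Qed.

Lemma path_sum_deg0 q w h : (forall i, q i = 0%nat) -> path_sum q w h = h (idm w).
Proof.
  intro Hq. assert (Hn : isNk k q) by (intros i _; auto).
  assert (Hd : forall i, deg (@idm G w) i = q i) by (intro i; rewrite deg_idm, Hq; auto).
  unfold path_sum. rewrite (lsum_perm _ (idm w :: nil)).
  - rewrite lsum_cons, lsum_nil. ring.
  - apply NoDup_Permutation.
    + apply NoDup_filter, paths_nodup; auto.
    + constructor; [simpl; tauto | constructor].
    + intro l. rewrite in_path_sum by auto. simpl. split.
      * intros [Hl Hr]. left. rewrite (deg_zero_idm l), Hr; auto. intro i; rewrite Hl; auto.
      * intros [<- | []]. split; auto. apply idm_rng.
Qed.

(* Unique factorisation identifies [v Lambda^(p+q)] with pairs [(eta, nu)] in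
   [v Lambda^p] and [s(eta) Lambda^q]. *)
Lemma path_sum_add p q v h : isNk k p -> isNk k q ->
  path_sum (addN p q) v h = path_sum p v (fun eta => path_sum q (src eta) (fun nu => h (comp eta nu))).
Proof.
  intros Hp Hq. unfold path_sum at 2.
  transitivity (lsum (flat_map (fun eta => map (comp eta) (filter (fun l => dec (rng l = src eta)) (paths q)))
               (filter (fun l => dec (rng l = v)) (paths p))) h).
  2:{ rewrite lsum_flat_map. apply lsum_ext. intros eta _. rewrite lsum_map. reflexivity. }
  unfold path_sum. apply lsum_perm. apply NoDup_Permutation.
  - apply NoDup_filter, paths_nodup, isNk_add; auto.
  - apply NoDup_flat_map_disjoint.
    + apply NoDup_filter, paths_nodup; auto.
    + intros eta _. apply FinFun.Injective_map_NoDup_in; [|apply NoDup_filter, paths_nodup; auto].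
      intros x x' Hx Hx' E. apply in_path_sum in Hx as [_ Rx], Hx' as [_ Rx']; auto.
      pose proof (prefix_comp_exact (deg eta) eta x (deg_isNk eta) (eq_sym Rx) (fun i => eq_refl)) as [_ E1].
      pose proof (prefix_comp_exact (deg eta) eta x' (deg_isNk eta) (eq_sym Rx') (fun i => eq_refl)) as [_ E2].
      congruence.
    + intros a b x Ha Hb Hxa Hxb.
      apply in_map_iff in Hxa as [na [<- Hna]], Hxb as [nb [E Hnb]].
      apply in_path_sum in Ha as [Ha _], Hb as [Hb _], Hna as [_ Rna], Hnb as [_ Rnb]; auto.
      pose proof (prefix_comp_exact p a na Hp (eq_sym Rna) Ha) as [E1 _].
      pose proof (prefix_comp_exact p b nb Hp (eq_sym Rnb) Hb) as [E2 _]. congruence.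
  - intros lam. rewrite in_flat_map, in_path_sum by (apply isNk_add; auto). split.
    + intros [Hd Hr].
      assert (Hle : forall i, (p i <= deg lam i)%nat) by (intro i; rewrite Hd; unfold addN; lia).
      destruct (prefix_suffix p lam Hp Hle) as (S & L & D1 & D2).
      exists (prefix p lam). split.
      * apply in_path_sum; auto. split; auto. rewrite <- Hr. rewrite L at 2. rewrite comp_rng; auto.
      * apply in_map_iff. exists (suffix p lam). split; auto. apply in_path_sum; auto.
        split; auto. intro i. rewrite D2, Hd. unfold addN. lia.
    + intros [eta [He Hl]]. apply in_path_sum in He as [He Re]; auto.
      apply in_map_iff in Hl as [nu [<- Hn]]. apply in_path_sum in Hn as [Hn Rn]; auto. split.
      * intro i. rewrite deg_comp, He, Hn by auto. reflexivity.
      * rewrite comp_rng; auto.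
Qed.

Section InfinitePaths.
Hypothesis edge_into : forall (w : Obj G) i, (i < k)%nat ->
  exists e : Mor G, rng e = w /\ forall j, deg e j = unitN i j.

Definition onesN (j : nat) : nat -> nat := fun i => if Nat.ltb i j then 1%nat else 0%nat.

Lemma ones_path_exists (w : Obj G) j : (j <= k)%nat ->
  exists e : Mor G, rng e = w /\ forall i, deg e i = onesN j i.
Proof.
  induction j as [|j IH]; intro Hj.
  - exists (idm w). split; [apply idm_rng|]. intro i. rewrite deg_idm. reflexivity.
  - destruct IH as [eta [R1 D1]]; [lia|]. destruct (edge_into (src eta) j) as [e [R2 D2]]; [lia|].
    exists (comp eta e). split; [rewrite comp_rng; auto|].
    intro i. rewrite deg_comp, D1, D2 by auto. unfold onesN, unitN.
    destruct (Nat.ltb_spec i j), (Nat.eqb_spec i j), (Nat.ltb_spec i (S j)); lia.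
Qed.

Definition ones_path (w : Obj G) : Mor G :=
  proj1_sig (constructive_indefinite_description _ (ones_path_exists w k (le_n k))).

Lemma ones_path_rng w : rng (ones_path w) = w.
Proof. exact (proj1 (proj2_sig (constructive_indefinite_description _ (ones_path_exists w k (le_n k))))). Qed.
Lemma ones_path_deg w i : deg (ones_path w) i = onesN k i.
Proof. exact (proj2 (proj2_sig (constructive_indefinite_description _ (ones_path_exists w k (le_n k)))) i). Qed.

Fixpoint extend_ones (om : Mor G) (J : nat) : Mor G :=
  match J with
  | O => om
  | S J' => comp (extend_ones om J') (ones_path (src (extend_ones om J')))
  end.

Lemma extend_ones_rng om J : rng (extend_ones om J) = rng om.
Proof. induction J; simpl; auto. rewrite comp_rng; auto. rewrite ones_path_rng; auto. Qed.

Lemma extend_ones_deg om J i : deg (extend_ones om J) i = (deg om i + J * onesN k i)%nat.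
Proof.
  induction J as [|J IH]; simpl; [lia|].
  rewrite deg_comp by (rewrite ones_path_rng; auto). rewrite IH, ones_path_deg. lia.
Qed.

Lemma extend_ones_tail om J t : exists r,
  src (extend_ones om J) = rng r /\ extend_ones om (t + J) = comp (extend_ones om J) r.
Proof.
  induction t as [|t IH].
  - exists (idm (src (extend_ones om J))). split; [rewrite idm_rng; auto|]. simpl. rewrite comp_idr. auto.
  - destruct IH as [r [S E]]. simpl. rewrite E.
    exists (comp r (ones_path (src (comp (extend_ones om J) r)))).
    assert (Sr : src r = rng (ones_path (src (comp (extend_ones om J) r))))
      by (rewrite ones_path_rng, comp_src; auto).
    split; [rewrite comp_rng; auto|]. apply comp_assoc; auto.
Qed.

Definition segment (W : Mor G) (p q : nat -> nat) : Mor G :=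
  prefix (fun i => (q i - p i)%nat) (suffix p W).

Lemma segment_unique W p q a b c : isNk k p -> isNk k q ->
  src a = rng b -> src b = rng c -> (forall i, deg a i = p i) -> (forall i, deg b i = (q i - p i)%nat) ->
  W = comp a (comp b c) -> segment W p q = b.
Proof.
  intros Hp Hq S1 S2 D1 D2 ->. unfold segment.
  rewrite (proj2 (prefix_comp_exact p a (comp b c) Hp ltac:(rewrite comp_rng; auto) D1)).
  apply prefix_comp_exact; auto. apply isNk_sub; auto.
Qed.

Lemma segment_decomp W p q : isNk k p -> isNk k q ->
  (forall i, (p i <= q i)%nat) -> (forall i, (q i <= deg W i)%nat) ->
  exists a c, src a = rng (segment W p q) /\ src (segment W p q) = rng c /\
    (forall i, deg a i = p i) /\ (forall i, deg (segment W p q) i = (q i - p i)%nat) /\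
    W = comp a (comp (segment W p q) c).
Proof.
  intros Hp Hq Hpq HqW.
  destruct (prefix_suffix p W Hp) as (S1 & L1 & D1 & D2); [intro i; specialize (Hpq i); specialize (HqW i); lia|].
  destruct (prefix_suffix (fun i => (q i - p i)%nat) (suffix p W) (isNk_sub _ _ _ Hq Hp))
    as (S3 & L3 & D3 & _); [intro i; rewrite D2; specialize (Hpq i); specialize (HqW i); lia|].
  exists (prefix p W), (suffix (fun i => (q i - p i)%nat) (suffix p W)). unfold segment.
  split; [rewrite S1, L3 at 1; rewrite comp_rng; auto|].
  split; [|split; [|split]]; auto. rewrite <- L3. auto.
Qed.

Lemma extend_ones_fits om J q : isNk k q -> (sumN q k <= J)%nat ->
  forall i, (q i <= deg (extend_ones om J) i)%nat.
Proof.
  intros Hq HJ i. rewrite extend_ones_deg. unfold onesN. destruct (Nat.ltb_spec i k).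
  - pose proof (sumN_ge q k i H). lia.
  - rewrite Hq; auto. lia.
Qed.

Lemma segment_extend_ones_stable om J J' p q : isNk k p -> isNk k q ->
  (forall i, (p i <= q i)%nat) -> (sumN q k <= J)%nat -> (J <= J')%nat ->
  segment (extend_ones om J') p q = segment (extend_ones om J) p q.
Proof.
  intros Hp Hq Hpq HJ HJJ.
  destruct (segment_decomp (extend_ones om J) p q Hp Hq Hpq (extend_ones_fits om J q Hq HJ))
    as (a & c & S1 & S2 & D1 & D2 & E).
  destruct (extend_ones_tail om J (J' - J)) as [r [Sr Er]]. replace (J' - J + J)%nat with J' in Er by lia.
  assert (Sc : src c = rng r) by (rewrite <- Sr, E, !comp_src; auto; rewrite comp_rng; auto).
  apply (segment_unique _ p q a (segment (extend_ones om J) p q) (comp c r)); auto.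
  - rewrite comp_rng; auto.
  - rewrite Er, E at 1. rewrite comp_assoc, comp_assoc; auto; [rewrite comp_rng | rewrite comp_src]; auto.
Qed.

Definition inf_path_of (om : Mor G) (p q : nat -> nat) : Mor G :=
  segment (extend_ones om (sumN q k)) p q.

Lemma inf_path_of_deg om p q : isNk k p -> isNk k q -> leN p q ->
  forall i, deg (inf_path_of om p q) i = (q i - p i)%nat.
Proof.
  intros Hp Hq Hpq. unfold inf_path_of.
  destruct (segment_decomp (extend_ones om (sumN q k)) p q Hp Hq Hpq (extend_ones_fits om _ q Hq (le_n _)))
    as (_ & _ & _ & _ & _ & D & _).
  exact D.
Qed.

Lemma inf_path_of_comp om m n p : isNk k m -> isNk k n -> isNk k p -> leN m n -> leN n p ->
  src (inf_path_of om m n) = rng (inf_path_of om n p) /\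
  inf_path_of om m p = comp (inf_path_of om m n) (inf_path_of om n p).
Proof.
  intros Hm Hn Hp Hmn Hnp. unfold inf_path_of.
  assert (Hmp : forall i, (m i <= p i)%nat) by (intro i; specialize (Hmn i); specialize (Hnp i); lia).
  rewrite <- (segment_extend_ones_stable om (sumN n k) (sumN p k) m n); auto; [|apply sumN_mono; auto].
  set (W := extend_ones om (sumN p k)).
  destruct (segment_decomp W n p Hn Hp Hnp (extend_ones_fits om _ p Hp (le_n _)))
    as (A & c & S1 & S2 & D1 & D2 & E).
  destruct (prefix_suffix m A Hm ltac:(intro i; rewrite D1; auto)) as (S4 & L4 & D4 & D5).
  set (a := prefix m A) in *. set (b1 := suffix m A) in *. set (b2 := segment W n p) in *.
  assert (Sb1 : src b1 = rng b2) by (rewrite <- S1, L4, comp_src; auto).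
  assert (EW : W = comp a (comp b1 (comp b2 c))).
  { rewrite E, L4 at 1. apply comp_assoc; auto. rewrite comp_rng; auto. }
  assert (Hb1 : segment W m n = b1).
  { apply (segment_unique W m n a b1 (comp b2 c)); auto; [rewrite comp_rng; auto|].
    intro i. rewrite D5, D1. auto. }
  rewrite Hb1. split; auto.
  apply (segment_unique W m p a (comp b1 b2) c); auto.
  - rewrite comp_rng; auto.
  - rewrite comp_src; auto.
  - intro i. rewrite deg_comp, D5, D1, D2 by auto. specialize (Hmn i); specialize (Hnp i); lia.
  - rewrite EW. f_equal. symmetry. apply comp_assoc; auto.
Qed.

Lemma inf_path_of_is_inf_path om : is_inf_path k G (inf_path_of om).
Proof.
  split; [|split].
  - intros m Hm. apply deg_zero_idm. intro i.
    rewrite inf_path_of_deg by (auto; intro; lia). lia.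
  - apply inf_path_of_deg.
  - apply inf_path_of_comp.
Qed.

Lemma inf_path_of_start om :
  inf_path_of om zeroN (deg om) = om /\ inf_path_of om zeroN zeroN = idm (rng om).
Proof.
  assert (Hz := isNk_zero k).
  split; unfold inf_path_of.
  - destruct (extend_ones_tail om 0 (sumN (deg om) k)) as [r [Sr Er]]. rewrite Nat.add_0_r in Er.
    apply (segment_unique _ zeroN (deg om) (idm (rng om)) om r); auto.
    + apply deg_isNk.
    + apply idm_src.
    + intro i. apply deg_idm.
    + intro i. unfold zeroN. lia.
    + rewrite Er. simpl. rewrite <- (comp_rng om r) at 1 by auto. rewrite comp_idl. auto.
  - set (W := extend_ones om (sumN zeroN k)).
    assert (HW : rng W = rng om) by apply extend_ones_rng.
    apply (segment_unique W zeroN zeroN (idm (rng om)) (idm (rng om)) W); auto.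
    + rewrite idm_src, idm_rng; auto.
    + rewrite idm_src; auto.
    + intro i. apply deg_idm.
    + intro i. apply deg_idm.
    + rewrite <- HW, !comp_idl. auto.
Qed.

Lemma inf_path_extending (om : Mor G) : exists x,
  is_inf_path k G x /\ x zeroN (deg om) = om /\ x zeroN zeroN = idm (rng om).
Proof.
  exists (inf_path_of om). split; [apply inf_path_of_is_inf_path | apply inf_path_of_start].
Qed.

End InfinitePaths.

Section InfinitePathFacts.
Variable x : (nat -> nat) -> (nat -> nat) -> Mor G.
Hypothesis Hx : is_inf_path k G x.

Lemma inf_path_deg a b : isNk k a -> isNk k b -> leN a b -> forall i, deg (x a b) i = (b i - a i)%nat.
Proof. apply Hx. Qed.

Lemma inf_path_split a b : isNk k a -> isNk k b -> leN a b ->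
  src (x zeroN a) = rng (x a b) /\ x zeroN b = comp (x zeroN a) (x a b).
Proof. intros Ha Hb Hab. apply Hx; auto. apply isNk_zero. intro; unfold zeroN; lia. Qed.

Lemma inf_path_prefix a b : isNk k a -> isNk k b -> leN a b ->
  prefix a (x zeroN b) = x zeroN a /\ suffix a (x zeroN b) = x a b.
Proof.
  intros Ha Hb Hab. destruct (inf_path_split a b Ha Hb Hab) as [S E]. rewrite E.
  apply prefix_comp_exact; auto. intro i.
  rewrite inf_path_deg by (auto; try apply isNk_zero; intro; unfold zeroN; lia). unfold zeroN. lia.
Qed.

Lemma inf_path_rng v b : x zeroN zeroN = idm v -> isNk k b -> rng (x zeroN b) = v.
Proof.
  intros H0 Hb. destruct (inf_path_split zeroN b (isNk_zero k) Hb) as [S E]; [intro; unfold zeroN; lia|].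
  rewrite E, comp_rng, H0 by auto. apply idm_rng.
Qed.

End InfinitePathFacts.

Notation MV := (mulmv (Obj G) (@verts G)).

Lemma inVW_iff v w (l : Mor G) : inVW v w l = true <-> rng l = v /\ src l = w.
Proof.
  unfold inVW. destruct (obj_eq_dec (rng l) v), (obj_eq_dec (src l) w); split; intros; try tauto; discriminate.
Qed.

Lemma edge_into_of_irreducible i : (i < k)%nat -> irreducible (coord_mat G i) ->
  forall w : Obj G, exists e : Mor G, rng e = w /\ forall j, deg e j = unitN i j.
Proof.
  intros Hi Hirr w. destruct (Hirr w w) as [n [Hn Hp]]. destruct n as [|n]; [lia|].
  simpl in Hp. unfold mmul, sumV in Hp. destruct (lsum_pos_inv _ _ Hp) as [u [_ Hu]].
  assert (Hc : 0 < coord_mat G i w u).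
  { pose proof (pos_INR (length (filter (inVW w u) (paths (unitN i))))) as H0. fold (coord_mat G i w u) in H0.
    destruct H0 as [|H0]; auto. rewrite <- H0, Rmult_0_l in Hu. lra. }
  unfold coord_mat in Hc. destruct (filter (inVW w u) (paths (unitN i))) as [|e l] eqn:Ef; [simpl in Hc; lra|].
  assert (He : In e (filter (inVW w u) (paths (unitN i)))) by (rewrite Ef; simpl; auto).
  apply filter_In in He as [He Hv]. apply inVW_iff in Hv. exists e. split; [tauto|].
  apply paths_in; auto. apply isNk_unitN; auto.
Qed.

Section Weights.
Variable y : Mor G -> R.
Variable beta : R.
Hypothesis Hy : is_Rplus_functor y.

Definition weight (l : Mor G) : R := exp (- beta * y l).

Lemma weight_pos l : 0 < weight l. Proof. apply exp_pos. Qed.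

Lemma weight_comp a b : src a = rng b -> weight (comp a b) = weight a * weight b.
Proof.
  intro H. unfold weight. destruct Hy as (_ & _ & Hc). rewrite Hc by auto. rewrite <- exp_plus. f_equal. ring.
Qed.

Lemma weight_idm v : weight (idm v) = 1.
Proof. unfold weight. destruct Hy as (_ & Hi & _). rewrite Hi, Rmult_0_r. apply exp_0. Qed.

Lemma Bmat_apply i xi v : (i < k)%nat ->
  MV (Bmat G y beta i) xi v = path_sum (unitN i) v (fun l => weight l * xi (src l)).
Proof.
  intro Hi. unfold mulmv, Bmat, path_sum.
  transitivity (lsum verts (fun w => lsum (paths (unitN i))
    (fun l => (if dec (rng l = v) then (if dec (src l = w) then weight l else 0) else 0) * xi w))).
  { apply lsum_ext. intros w _.
    change (fold_right Rplus 0 (map (fun lam => exp (- beta * y lam)) (filter (inVW v w) (paths (unitN i)))))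
      with (lsum (filter (inVW v w) (paths (unitN i))) weight).
    rewrite lsum_filter, <- lsum_scalr. apply lsum_ext. intros l _.
    destruct (inVW v w l) eqn:Ev.
    - apply inVW_iff in Ev as [-> ->]. rewrite !dec_of_true by auto. reflexivity.
    - destruct (dec (rng l = v)) eqn:E1; [|ring]. destruct (dec (src l = w)) eqn:E2; [|ring].
      apply dec_true in E1, E2. assert (inVW v w l = true) by (apply inVW_iff; auto). congruence. }
  rewrite lsum_swap, lsum_filter. apply lsum_ext. intros l _. destruct (dec (rng l = v)).
  - rewrite <- (lsum_delta verts (src l) (fun w => weight l * xi w) verts_nodup (verts_all _)).
    apply lsum_ext. intros w _. destruct (dec (src l = w)); ring.
  - rewrite (lsum_ext _ _ (fun _ => 0)); [apply lsum_zero | intros; ring].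
Qed.

Lemma Bmat_apply_twice a b xi v : (a < k)%nat -> (b < k)%nat ->
  MV (Bmat G y beta a) (MV (Bmat G y beta b) xi) v =
  path_sum (addN (unitN a) (unitN b)) v (fun l => weight l * xi (src l)).
Proof.
  intros Ha Hb. rewrite Bmat_apply, path_sum_add by (auto; apply isNk_unitN; auto).
  apply path_sum_ext; [apply isNk_unitN; auto|]. intros eta _ _.
  rewrite Bmat_apply, <- path_sum_scal by auto.
  apply path_sum_ext; [apply isNk_unitN; auto|]. intros nu _ Hr.
  rewrite weight_comp, comp_src by auto. ring.
Qed.

Lemma Bmat_commute i j xi v : (i < k)%nat -> (j < k)%nat ->
  MV (Bmat G y beta i) (MV (Bmat G y beta j) xi) v = MV (Bmat G y beta j) (MV (Bmat G y beta i) xi) v.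
Proof.
  intros Hi Hj. rewrite !Bmat_apply_twice by auto. f_equal.
  apply functional_extensionality. intro. unfold addN. lia.
Qed.

Section CommonEigenvector.
Hypothesis Hirr : forall i, (i < k)%nat -> irreducible (coord_mat G i).
Variable rho : nat -> R.
Hypothesis Hrho : forall i, (i < k)%nat -> is_spectral_radius (Bmat G y beta i) (rho i).

Lemma Bmat_nonneg i u w : 0 <= Bmat G y beta i u w.
Proof. apply (lsum_nonneg _ weight). intros; apply Rlt_le, weight_pos. Qed.

Lemma coord_mat_pos_iff i u w : 0 < coord_mat G i u w <-> 0 < Bmat G y beta i u w.
Proof.
  unfold coord_mat, Bmat. destruct (filter (inVW u w) (paths (unitN i))) as [|e l].
  - simpl. lra.
  - split; intros _.
    + apply (lsum_pos (e :: l) weight e); [intros; apply Rlt_le, weight_pos | simpl; auto | apply weight_pos].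
    + simpl length. apply lt_0_INR. lia.
Qed.

Lemma mpow_nonneg (A : mat G) n u w : (forall a b, 0 <= A a b) -> 0 <= mpow A n u w.
Proof.
  intro HA. revert u w; induction n as [|n IH]; intros u w; simpl.
  - unfold mid. destruct (obj_eq_dec u w); lra.
  - apply (lsum_nonneg _ (fun t => A u t * mpow A n t w)). intros; apply Rmult_le_pos; auto.
Qed.

Lemma mpow_pos_iff (A C : mat G) n u w : (forall a b, 0 <= A a b) -> (forall a b, 0 <= C a b) ->
  (forall a b, 0 < A a b <-> 0 < C a b) -> (0 < mpow A n u w <-> 0 < mpow C n u w).
Proof.
  intros HA HC HAC.
  assert (Hprod : forall (M : mat G) m a b c, (forall a b, 0 <= M a b) ->
            0 < M a b * mpow M m b c <-> 0 < M a b /\ 0 < mpow M m b c).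
  { intros M m a b c HM. pose proof (HM a b). pose proof (mpow_nonneg M m b c HM).
    split; [intro; split; apply Rnot_le_lt; intro; nra | intros []; apply Rmult_lt_0_compat; auto]. }
  revert u w; induction n as [|n IH]; intros u w; [simpl; tauto|]. simpl. unfold mmul, sumV.
  fold (lsum verts (fun t => A u t * mpow A n t w)). fold (lsum verts (fun t => C u t * mpow C n t w)).
  split; intro H; destruct (lsum_pos_inv _ _ H) as [t [Ht Hp]];
    (apply (lsum_pos _ _ t); auto; [intros; apply Rmult_le_pos; auto; apply mpow_nonneg; auto|]);
    apply Hprod in Hp as [H1 H2]; auto; apply Hprod; auto; rewrite HAC, IH in *; auto.
Qed.

Lemma MV_mmul A C x v : MV (mmul A C) x v = MV A (MV C x) v.
Proof.
  transitivity (lsum verts (fun j => lsum verts (fun u => A v u * C u j * x j))).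
  - apply lsum_ext. intros j _. unfold mmul, sumV.
    fold (lsum (@verts G) (fun u => A v u * C u j)). rewrite <- lsum_scalr. apply lsum_ext; intros; ring.
  - unfold mulmv. rewrite lsum_swap. apply lsum_ext. intros u _. rewrite <- lsum_scal. apply lsum_ext; intros; ring.
Qed.

Lemma MV_mid x v : MV (mid G) x v = x v.
Proof.
  unfold mulmv, mid. rewrite <- (lsum_delta verts v x verts_nodup (verts_all v)).
  apply lsum_ext. intros u _. destruct (obj_eq_dec v u); [rewrite dec_of_true | rewrite dec_of_false]; auto; subst; ring.
Qed.

Lemma mpow_commute (A C : mat G) n : (forall x v, MV A (MV C x) v = MV C (MV A x) v) ->
  forall x v, MV (mpow A n) (MV C x) v = MV C (MV (mpow A n) x) v.
Proof.
  intros HAC x. induction n as [|n IH]; intro v; simpl.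
  - rewrite MV_mid. apply mulmv_ext. intro; rewrite MV_mid; auto.
  - rewrite !MV_mmul, (mulmv_ext _ _ _ _ (MV C (MV (mpow A n) x))) by auto.
    rewrite HAC. apply mulmv_ext. intro u. rewrite MV_mmul. auto.
Qed.

Section FirstCoordinate.
Hypothesis Hk : (0 < k)%nat.

Definition B0 : mat G := Bmat G y beta 0.

Definition connecting_power (u w : Obj G) : nat :=
  proj1_sig (constructive_indefinite_description _ (Hirr 0 Hk u w)).

Lemma connecting_power_pos u w : 0 < mpow B0 (connecting_power u w) u w.
Proof.
  unfold connecting_power. destruct (proj2_sig (constructive_indefinite_description _ (Hirr 0 Hk u w))) as [_ Hn].
  apply (mpow_pos_iff (coord_mat G 0)); auto.
  - intros; apply pos_INR.
  - apply Bmat_nonneg.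
  - apply coord_mat_pos_iff.
Qed.

(* A positive matrix which is a polynomial in [B_0], hence commutes with every [B_i]. *)
Definition positive_hull : mat G :=
  fun u w => lsum (list_prod verts verts) (fun pr => mpow B0 (connecting_power (fst pr) (snd pr)) u w).

Lemma positive_hull_pos u w : 0 < positive_hull u w.
Proof.
  apply (lsum_pos _ _ (u, w)); [intros; apply mpow_nonneg, Bmat_nonneg | | apply connecting_power_pos].
  apply in_prod; apply verts_all.
Qed.

Lemma positive_hull_commute i x v : (i < k)%nat ->
  MV positive_hull (MV (Bmat G y beta i) x) v = MV (Bmat G y beta i) (MV positive_hull x) v.
Proof.
  intro Hi.
  assert (Hpow : forall z u, MV positive_hull z u =
            lsum (list_prod verts verts) (fun pr => MV (mpow B0 (connecting_power (fst pr) (snd pr))) z u)).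
  { intros z u. unfold mulmv, positive_hull.
    transitivity (lsum verts (fun j => lsum (list_prod verts verts)
      (fun pr => mpow B0 (connecting_power (fst pr) (snd pr)) u j * z j))).
    - apply lsum_ext. intros j _. rewrite <- lsum_scalr. reflexivity.
    - apply lsum_swap. }
  rewrite Hpow, (mulmv_ext _ _ _ _ _ _ (Hpow x)), mulmv_lsum. apply lsum_ext. intros pr _.
  apply mpow_commute. intros; apply Bmat_commute; auto.
Qed.

Theorem common_eigenvector (v0 : Obj G) : exists xi : Obj G -> R, (forall v, 0 < xi v) /\
  forall i, (i < k)%nat -> 0 < rho i /\ forall v, MV (Bmat G y beta i) xi v = rho i * xi v.
Proof.
  destruct (perron_positive (Obj G) verts verts_all v0 positive_hull positive_hull_pos)
    as [xi [r [Hx [Hr Heig]]]].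
  exists xi. split; auto. intros i Hi.
  destruct (positive_eigenvector_unique (Obj G) verts verts_all v0 positive_hull xi
              (MV (Bmat G y beta i) xi) r positive_hull_pos Hx Heig) as [c Hc].
  { intro v. rewrite positive_hull_commute by auto.
    rewrite (mulmv_ext _ _ _ _ (fun u => r * xi u)) by auto. apply mulmv_scal. }
  assert (Hcp : 0 < c).
  { destruct (edge_into_of_irreducible i Hi (Hirr i Hi) v0) as [e [Re De]].
    assert (0 < MV (Bmat G y beta i) xi v0).
    { rewrite Bmat_apply by auto. apply (lsum_pos _ _ e).
      - intros; apply Rlt_le, Rmult_lt_0_compat; [apply weight_pos | apply Hx].
      - apply in_path_sum; [apply isNk_unitN; auto | auto].
      - apply Rmult_lt_0_compat; [apply weight_pos | apply Hx]. }
    rewrite Hc in H. pose proof (Hx v0). nra. }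
  assert (c = rho i); [|subst; split; auto].
  apply (is_lub_u _ _ _ (positive_eigenvector_spectral_radius (Obj G) verts verts_all v0 _ xi c
                          (Bmat_nonneg i) Hx (Rlt_le _ _ Hcp) Hc)).
  apply Hrho; auto.
Qed.

End FirstCoordinate.
End CommonEigenvector.

Section WeightedPathSums.
Variable rho : nat -> R.
Variable xi : Obj G -> R.
Hypothesis xi_pos : forall v, 0 < xi v.
Hypothesis xi_eigen : forall i, (i < k)%nat ->
  0 < rho i /\ forall v, MV (Bmat G y beta i) xi v = rho i * xi v.

Definition xi_weight (l : Mor G) : R := weight l * xi (src l).

Lemma xi_weight_pos l : 0 < xi_weight l.
Proof. apply Rmult_lt_0_compat; [apply weight_pos | apply xi_pos]. Qed.

Lemma path_sum_xi_weight_step q i w : isNk k q -> (i < k)%nat ->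
  path_sum (addN q (unitN i)) w xi_weight = rho i * path_sum q w xi_weight.
Proof.
  intros Hq Hi. rewrite path_sum_add by (auto; apply isNk_unitN; auto).
  rewrite <- path_sum_scal. apply path_sum_ext; auto. intros eta _ _.
  transitivity (weight eta * MV (Bmat G y beta i) xi (src eta)).
  - rewrite Bmat_apply by auto. unfold xi_weight. rewrite <- path_sum_scal.
    apply path_sum_ext; [apply isNk_unitN; auto|]. intros nu _ Hr.
    rewrite weight_comp, comp_src by auto. ring.
  - rewrite (proj2 (xi_eigen i Hi)). unfold xi_weight. ring.
Qed.

Lemma path_sum_xi_weight q w : isNk k q -> path_sum q w xi_weight = rho_pow k rho q * xi w.
Proof.
  remember (sumN q k) as N eqn:HN. revert q w HN. induction N as [|N IH]; intros q w HN Hq.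
  - assert (H0 : forall i, q i = 0%nat).
    { intro i. destruct (Nat.ltb_spec i k); [pose proof (sumN_ge q k i H); lia | apply Hq; auto]. }
    rewrite path_sum_deg0, rho_pow_zero by auto. unfold xi_weight. rewrite weight_idm, idm_src. ring.
  - destruct (classic (exists i, (i < k)%nat /\ (0 < q i)%nat)) as [[i [Hi Hqi]]|Hn].
    2:{ exfalso. rewrite sumN_zero in HN; [lia|]. intros i Hi.
        destruct (Nat.eq_dec (q i) 0); auto. exfalso. apply Hn. exists i. split; auto. lia. }
    set (q' := fun j => (q j - unitN i j)%nat).
    assert (Eq : q = addN q' (unitN i)).
    { apply functional_extensionality. intro j. unfold addN, q', unitN.
      destruct (Nat.eqb_spec j i); [subst|]; lia. }
    assert (Hq' : isNk k q') by (apply isNk_sub; auto; apply isNk_unitN; auto).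
    assert (HN' : N = sumN q' k).
    { rewrite Eq, sumN_add, sumN_unitN in HN. destruct (Nat.ltb_spec i k); lia. }
    rewrite Eq, path_sum_xi_weight_step, IH, rho_pow_add, rho_pow_unitN by auto. ring.
Qed.

Section Cylinders.
Hypothesis edge_into : forall (w : Obj G) i, (i < k)%nat ->
  exists e : Mor G, rng e = w /\ forall j, deg e j = unitN i j.
Variable v : Obj G.
Variables m n : nat -> nat.
Hypothesis Hm : isNk k m.
Hypothesis Hn : isNk k n.
Variables al ga : Mor G.

Definition in_cylinder (om : Mor G) : Prop := prefix m om = al /\ prefix n om = ga.

Definition cylinder (N : nat -> nat) : list (Mor G) :=
  filter (fun om => dec (in_cylinder om)) (filter (fun l => dec (rng l = v)) (paths N)).

Lemma in_cylinder_iff N om : isNk k N ->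
  In om (cylinder N) <-> ((forall i, deg om i = N i) /\ rng om = v) /\ in_cylinder om.
Proof.
  intro HN. unfold cylinder. rewrite filter_In, in_path_sum by auto.
  split; intros [H1 H2]; split; auto; [apply dec_true | apply dec_of_true]; auto.
Qed.

Lemma cylinder_sum N : isNk k N ->
  lsum (cylinder N) xi_weight = path_sum N v (fun om => if dec (in_cylinder om) then xi_weight om else 0).
Proof. intro HN. unfold cylinder. rewrite lsum_filter. reflexivity. Qed.

(* Lengthening does not leave the cylinder, so its weight grows by [rho(B)^q]. *)
Lemma cylinder_sum_extend N q : isNk k N -> isNk k q -> leN m N -> leN n N ->
  lsum (cylinder (addN N q)) xi_weight = lsum (cylinder N) xi_weight * rho_pow k rho q.
Proof.
  intros HN Hq HmN HnN. rewrite !cylinder_sum, path_sum_add by (auto; apply isNk_add; auto).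
  transitivity (path_sum N v (fun om => (if dec (in_cylinder om) then xi_weight om else 0) * rho_pow k rho q));
    [| apply lsum_scalr].
  apply path_sum_ext; auto. intros om Hd Hr.
  assert (Hstay : forall nu, rng nu = src om -> in_cylinder (comp om nu) <-> in_cylinder om).
  { intros nu Hnu. unfold in_cylinder.
    rewrite !prefix_comp by (auto; intro i; rewrite Hd; auto). tauto. }
  destruct (dec (in_cylinder om)) eqn:D.
  - apply dec_true in D. transitivity (path_sum q (src om) (fun nu => weight om * xi_weight nu)).
    + apply path_sum_ext; auto. intros nu _ Hnu. rewrite dec_of_true by (apply Hstay; auto).
      unfold xi_weight. rewrite weight_comp, comp_src by auto. ring.
    + rewrite path_sum_scal, path_sum_xi_weight by auto. unfold xi_weight. ring.
  - apply dec_false in D. rewrite Rmult_0_l. transitivity (path_sum q (src om) (fun _ => 0));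
      [|apply path_sum_zero].
    apply path_sum_ext; auto. intros nu _ Hnu. rewrite dec_of_false; [reflexivity|].
    intro C. apply D, (Hstay nu); auto.
Qed.

Lemma in_cylinder_suffixes a N tau : isNk k a -> isNk k N -> leN a N -> leN m N -> leN n N ->
  In tau (map (suffix a) (cylinder N)) <->
  exists x, is_inf_path k G x /\ x zeroN zeroN = idm v /\ x zeroN m = al /\ x zeroN n = ga /\ x a N = tau.
Proof.
  intros Ha HN HaN HmN HnN. rewrite in_map_iff. split.
  - intros [om [<- Hom]]. apply in_cylinder_iff in Hom as [[Hd Hr] [C1 C2]]; auto.
    destruct (inf_path_extending edge_into om) as [x [Hx [X1 X2]]].
    replace (deg om) with N in X1 by (apply functional_extensionality; auto).
    exists x. split; [|split; [rewrite X2, Hr; auto|]]; auto. subst om.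
    rewrite (proj1 (inf_path_prefix x Hx m N Hm HN HmN)) in C1.
    rewrite (proj1 (inf_path_prefix x Hx n N Hn HN HnN)) in C2.
    rewrite (proj2 (inf_path_prefix x Hx a N Ha HN HaN)). auto.
  - intros [x [Hx [X0 [Xm [Xn Xa]]]]]. exists (x zeroN N).
    split; [rewrite (proj2 (inf_path_prefix x Hx a N Ha HN HaN)); auto|].
    apply in_cylinder_iff; auto. split; [split|split].
    + intro i. rewrite (inf_path_deg x Hx zeroN N (isNk_zero k) HN) by (intro; unfold zeroN; lia).
      unfold zeroN. lia.
    + apply (inf_path_rng x Hx v N X0 HN).
    + rewrite (proj1 (inf_path_prefix x Hx m N Hm HN HmN)). auto.
    + rewrite (proj1 (inf_path_prefix x Hx n N Hn HN HnN)). auto.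
Qed.

Section CommonPrefix.
Variables (a : nat -> nat) (c : Mor G) (N : nat -> nat).
Hypotheses (Ha : isNk k a) (HN : isNk k N) (HaN : leN a N).
Hypothesis prefix_const : forall om, In om (cylinder N) -> prefix a om = c.

Lemma cylinder_prefix_suffix om : In om (cylinder N) ->
  src c = rng (suffix a om) /\ om = comp c (suffix a om).
Proof.
  intro Hom. rewrite <- (prefix_const om Hom).
  apply in_cylinder_iff in Hom as [[Hd _] _]; auto.
  destruct (prefix_suffix a om) as (S & E & _); auto. intro i. rewrite Hd. apply HaN.
Qed.

Lemma cylinder_suffixes_nodup : NoDup (map (suffix a) (cylinder N)).
Proof.
  apply FinFun.Injective_map_NoDup_in.
  - intros o1 o2 H1 H2 E. rewrite (proj2 (cylinder_prefix_suffix o1 H1)), (proj2 (cylinder_prefix_suffix o2 H2)), E.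
    reflexivity.
  - unfold cylinder. apply NoDup_filter, NoDup_filter, paths_nodup; auto.
Qed.

Lemma cylinder_sum_factor :
  lsum (cylinder N) xi_weight = weight c * lsum (map (suffix a) (cylinder N)) xi_weight.
Proof.
  rewrite lsum_map, <- lsum_scal. apply lsum_ext. intros om Hom.
  destruct (cylinder_prefix_suffix om Hom) as [S E]. unfold xi_weight.
  rewrite E at 1 2. rewrite weight_comp, comp_src by auto. ring.
Qed.

End CommonPrefix.

Lemma cylinder_prefix_m N om : isNk k N -> In om (cylinder N) -> prefix m om = al.
Proof. intros HN Hom. apply in_cylinder_iff in Hom as [_ [C _]]; auto. Qed.

Lemma cylinder_prefix_n N om : isNk k N -> In om (cylinder N) -> prefix n om = ga.
Proof. intros HN Hom. apply in_cylinder_iff in Hom as [_ [_ C]]; auto. Qed.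

Lemma cylinder_suffixes_shift P : isNk k P -> leN m P -> leN n P -> shift_eq_on k G v m n ->
  Permutation (map (suffix m) (cylinder (addN P m))) (map (suffix n) (cylinder (addN P n))).
Proof.
  intros HP HmP HnP Hper.
  assert (Hshift : forall x, is_inf_path k G x -> x zeroN zeroN = idm v -> x m (addN P m) = x n (addN P n)).
  { intros x Hx H0. pose proof (Hper x Hx H0 zeroN P (isNk_zero k) HP ltac:(intro; unfold zeroN; lia)) as E.
    replace (addN zeroN m) with m in E by (apply functional_extensionality; reflexivity).
    replace (addN zeroN n) with n in E by (apply functional_extensionality; reflexivity). exact E. }
  apply NoDup_Permutation.
  - apply (cylinder_suffixes_nodup m al); auto using isNk_add, leN_addN_r.
    intro om. apply cylinder_prefix_m, isNk_add; auto.
  - apply (cylinder_suffixes_nodup n ga); auto using isNk_add, leN_addN_r.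
    intro om. apply cylinder_prefix_n, isNk_add; auto.
  - intro tau. rewrite !in_cylinder_suffixes by auto using isNk_add, leN_addN_r, leN_trans_addN.
    split; intros [x [Hx [H0 [Hal [Hga <-]]]]]; exists x; do 4 (split; auto).
    symmetry. apply Hshift; auto.
Qed.

End Cylinders.

Lemma shift_eq_weight_balance
    (edge_into : forall (w : Obj G) i, (i < k)%nat -> exists e : Mor G, rng e = w /\ forall j, deg e j = unitN i j)
    v m n : isNk k m -> isNk k n -> shift_eq_on k G v m n ->
  exists al ga : Mor G, deg al = m /\ deg ga = n /\
    weight al * rho_pow k rho n = weight ga * rho_pow k rho m.
Proof.
  intros Hm Hn Hper.
  destruct (inf_path_extending edge_into (idm v)) as [x0 [Hx0 [_ X0]]]. rewrite idm_rng in X0.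
  set (al := x0 zeroN m). set (ga := x0 zeroN n). set (P := addN m n).
  assert (HP : isNk k P) by (apply isNk_add; auto).
  assert (HmP : leN m P) by (intro; unfold P, addN; lia).
  assert (HnP : leN n P) by (intro; unfold P, addN; lia).
  assert (Hdeg : forall a, isNk k a -> deg (x0 zeroN a) = a).
  { intros a Ha. apply functional_extensionality. intro i.
    rewrite (inf_path_deg x0 Hx0) by (auto; apply isNk_zero || (intro; unfold zeroN; lia)). unfold zeroN. lia. }
  exists al, ga. split; [apply Hdeg; auto|]. split; [apply Hdeg; auto|].
  set (S := lsum (map (suffix m) (cylinder v m n al ga (addN P m))) xi_weight).
  assert (Spos : 0 < S).
  { apply (lsum_pos _ _ (x0 m (addN P m))); [intros; apply Rlt_le, xi_weight_pos | | apply xi_weight_pos].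
    apply in_cylinder_suffixes; auto using isNk_add, leN_addN_r, leN_trans_addN.
    exists x0. do 4 (split; auto). }
  assert (Fm : lsum (cylinder v m n al ga (addN P m)) xi_weight = weight al * S).
  { apply cylinder_sum_factor; auto using isNk_add, leN_addN_r.
    intro om. apply cylinder_prefix_m, isNk_add; auto. }
  assert (Fn : lsum (cylinder v m n al ga (addN P n)) xi_weight = weight ga * S).
  { unfold S. rewrite (lsum_perm _ _ _ (cylinder_suffixes_shift edge_into v m n Hm Hn al ga P HP HmP HnP Hper)).
    apply cylinder_sum_factor; auto using isNk_add, leN_addN_r.
    intro om. apply cylinder_prefix_n, isNk_add; auto. }
  assert (E : lsum (cylinder v m n al ga (addN P m)) xi_weight * rho_pow k rho n =
              lsum (cylinder v m n al ga (addN P n)) xi_weight * rho_pow k rho m).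
  { rewrite <- !cylinder_sum_extend by (auto using isNk_add, leN_trans_addN).
    replace (addN (addN P n) m) with (addN (addN P m) n); [reflexivity|].
    apply functional_extensionality. intro. unfold addN. lia. }
  rewrite Fm, Fn in E. apply (Rmult_eq_reg_r S); lra.
Qed.

End WeightedPathSums.
End Weights.
End KGraph.

Lemma weight_balance_level (G : kgraph_data) y beta (a b : Mor G) ra rb :
  0 < beta -> 0 < ra -> 0 < rb -> weight G y beta a * rb = weight G y beta b * ra ->
  y a + / beta * ln ra = y b + / beta * ln rb.
Proof.
  intros Hb Ha Hr E. apply (f_equal ln) in E. unfold weight in E.
  rewrite !ln_mult, !ln_exp in E by (apply exp_pos || auto).
  apply (Rmult_eq_reg_l beta); [|lra].
  rewrite !Rmult_plus_distr_l, <- !Rmult_assoc, Rinv_r, !Rmult_1_l by lra. lra.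
Qed.

Lemma shift_eq_same_degree k (G : kgraph_data) y beta rho (v : Obj G) m n :
  is_finite_kgraph k G -> (forall i, (i < k)%nat -> irreducible (coord_mat G i)) ->
  is_Rplus_functor y -> 0 < beta ->
  (forall i, (i < k)%nat -> is_spectral_radius (Bmat G y beta i) (rho i)) ->
  (forall lam nu : Mor G, y lam + / beta * ln (rho_pow k rho (deg lam)) =
     y nu + / beta * ln (rho_pow k rho (deg nu)) -> forall i, deg lam i = deg nu i) ->
  isNk k m -> isNk k n -> shift_eq_on k G v m n -> forall i, m i = n i.
Proof.
  intros HG Hirr Hy Hbeta Hrho Hlevel Hm Hn Hper. destruct (Nat.eq_dec k 0) as [->|Hk].
  - intro i. rewrite Hm, Hn by lia. reflexivity.
  - destruct (common_eigenvector k G HG y beta Hy Hirr rho Hrho ltac:(lia) v) as [xi [Hxi Heig]].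
    destruct (shift_eq_weight_balance k G HG y beta Hy rho xi Hxi Heig
                (fun w i Hi => edge_into_of_irreducible k G HG i Hi (Hirr i Hi) w) v m n Hm Hn Hper)
      as (al & ga & <- & <- & Hbal).
    apply Hlevel, weight_balance_level; auto; apply rho_pow_pos; intros i Hi; apply Heig; auto.
Qed.

Theorem corollary4p11 :
  forall (k : nat) (G : kgraph_data),
    is_finite_kgraph k G ->
    (forall i, (i < k)%nat -> irreducible (coord_mat G i)) ->
    forall (y : Mor G -> R) (beta : R),
      is_Rplus_functor y -> 0 < beta ->
      forall rho : nat -> R,
        (forall i, (i < k)%nat -> is_spectral_radius (Bmat G y beta i) (rho i)) ->
        (forall lam nu : Mor G,
           y lam + / beta * ln (rho_pow k rho (deg lam))
             = y nu + / beta * ln (rho_pow k rho (deg nu)) ->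
           forall i, deg lam i = deg nu i) ->
        aperiodic k G.
Proof.
  intros k G HG Hirr y beta Hy Hbeta rho Hrho Hlevel v z Hz.
  induction Hz as [m n Hm Hn Hper| |z1 z2 _ IH1 _ IH2|z _ IH]; intro i.
  - rewrite (shift_eq_same_degree k G y beta rho v m n HG Hirr Hy Hbeta Hrho Hlevel Hm Hn Hper i). lia.
  - reflexivity.
  - rewrite IH1, IH2. reflexivity.
  - rewrite IH. reflexivity.
Qed.
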